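(* (Church-Rosser) For all terms $e, e_1, e_2$: if $e \to\!\!\to e_1$ and $e \to\!\!\to e_2$, then there exists a term $e'$ such that $e_1 \to\!\!\to e'$ and $e_2 \to\!\!\to e'$.
   Context: Terms: $e ::= x \mid \lambda x.e \mid e\,e$ (modulo $\alpha$-equivalence, Barendregt's variable convention). Values: $v ::= \lambda x.e$. A context is a term with one hole $[\,]$; $C[e]$ is plugging, $C_1[C_2]$ composition. Answer contexts: $A ::= [\,] \mid A[\lambda x.A]\,e$. Outer partial answer contexts: $A^{\uparrow} ::= [\,] \mid A[A^{\uparrow}]\,e$. Inner partial answer contexts: $A^{\downarrow} ::= [\,] \mid A[\lambda x.A^{\downarrow}]$. Evaluation contexts: $E ::= [\,] \mid E\,e \mid A[E] \mid A^{\uparrow}[A[\lambda x.A^{\downarrow}[E[x]]]\,E]$, where in the last production $A^{\uparrow}[A^{\downarrow}]$ must be an answer context. Axiom $\beta_{need}$: $A^{\uparrow}[A_1[\lambda x.A^{\downarrow}[E[x]]]\,A_2[v]] \;\beta_{need}\; A^{\uparrow}[A_1[A_2[(A^{\downarrow}[E[x]])\{x:=v\}]]]$ provided $A^{\uparrow}[A^{\downarrow}]$ is an answer context ($\{x:=v\}$ capture-avoiding substitution for all free occurrences of $x$). $\to$ is the compatible closure of $\beta_{need}$ (closure under contexts $C ::= [\,] \mid \lambda x.C \mid C\,e \mid e\,C$) and $\to\!\!\to$ its reflexive–transitive closure. *)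

(* Call-by-need lambda calculus; terms modulo alpha-equivalence
   are represented with de Bruijn indices. *)
From Stdlib Require Import Arith Relations.

Inductive term : Type :=
| Var : nat -> term
| Lam : term -> term
| App : term -> term -> term.

Fixpoint shift (d c : nat) (t : term) : term :=
  match t with
  | Var i => if Nat.ltb i c then Var i else Var (i + d)
  | Lam b => Lam (shift d (S c) b)
  | App t1 t2 => App (shift d c t1) (shift d c t2)
  end.

Definition up (s : nat -> term) : nat -> term :=
  fun i => match i with 0 => Var 0 | S j => shift 1 0 (s j) end.

Fixpoint subst (s : nat -> term) (t : term) : term :=
  match t with
  | Var i => s i
  | Lam b => Lam (subst (up s) b)
  | App t1 t2 => App (subst s t1) (subst s t2)
  end.

Inductive ctx : Type :=
| Hole : ctx
| CLam : ctx -> ctx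
| CAppL : ctx -> term -> ctx
| CAppR : term -> ctx -> ctx.

(* Plugging (may capture, as in the paper). *)
Fixpoint plug (C : ctx) (t : term) : term :=
  match C with
  | Hole => t
  | CLam C' => Lam (plug C' t)
  | CAppL C' e => App (plug C' t) e
  | CAppR e C' => App e (plug C' t)
  end.

Fixpoint comp (C1 C2 : ctx) : ctx :=
  match C1 with
  | Hole => C2
  | CLam C' => CLam (comp C' C2)
  | CAppL C' e => CAppL (comp C' C2) e
  | CAppR e C' => CAppR e (comp C' C2)
  end.

Fixpoint depth (C : ctx) : nat :=
  match C with
  | Hole => 0
  | CLam C' => S (depth C')
  | CAppL C' _ => depth C'
  | CAppR _ C' => depth C'
  end.

Fixpoint shiftc (d c : nat) (C : ctx) : ctx :=
  match C with
  | Hole => Hole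
  | CLam C' => CLam (shiftc d (S c) C')
  | CAppL C' e => CAppL (shiftc d c C') (shift d c e)
  | CAppR e C' => CAppR (shift d c e) (shiftc d c C')
  end.

Inductive isA : ctx -> Prop :=
| isA_hole : isA Hole
| isA_app : forall A1 A2 e, isA A1 -> isA A2 -> isA (CAppL (comp A1 (CLam A2)) e).

Inductive isAup : ctx -> Prop :=
| isAup_hole : isAup Hole
| isAup_app : forall A U e, isA A -> isAup U -> isAup (CAppL (comp A U) e).

Inductive isAdown : ctx -> Prop :=
| isAdown_hole : isAdown Hole
| isAdown_lam : forall A D, isA A -> isAdown D -> isAdown (comp A (CLam D)).

(* E ::= [] | E e | A[E] | A^up[A[\x.A^down[E[x]]] E]   (A^up[A^down] answer ctx)
   In E[x], x is the variable bound by the displayed lambda; its de Bruijn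
   index is the number of binders of A^down and E above the hole. *)
Inductive isE : ctx -> Prop :=
| isE_hole : isE Hole
| isE_appL : forall E e, isE E -> isE (CAppL E e)
| isE_ans : forall A E, isA A -> isE E -> isE (comp A E)
| isE_need : forall U A D E1 E2,
    isAup U -> isA A -> isAdown D -> isE E1 -> isE E2 -> isA (comp U D) ->
    isE (comp U (CAppR (plug A (Lam (plug D (plug E1 (Var (depth D + depth E1)))))) E2)).

(* beta_need:
   A^up[A1[\x.A^down[E[x]]] A2[v]]  ->  A^up[A1[A2[(A^down[E[x]]){x:=v}]]]
   The argument A2[v] is moved under the binders of A1, hence shifted by
   depth A1 (Barendregt convention); body indices other than x are shifted
   past the binders of A2. *)
Definition need_sub (k1 k2 : nat) (v : term) : nat -> term :=
  fun i => match i with 0 => shift k1 k2 v | S j => Var (j + k2) end.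

Inductive beta_need : term -> term -> Prop :=
| beta_need_rule : forall U A1 D E A2 b,
    isAup U -> isA A1 -> isAdown D -> isE E -> isA A2 -> isA (comp U D) ->
    beta_need
      (plug U (App (plug A1 (Lam (plug D (plug E (Var (depth D + depth E))))))
                   (plug A2 (Lam b))))
      (plug U (plug A1 (plug (shiftc (depth A1) 0 A2)
         (subst (need_sub (depth A1) (depth A2) (Lam b))
                (plug D (plug E (Var (depth D + depth E)))))))).

Inductive step : term -> term -> Prop :=
| step_root : forall t u, beta_need t u -> step t u
| step_lam : forall t u, step t u -> step (Lam t) (Lam u)
| step_appL : forall t u e, step t u -> step (App t e) (App u e)
| step_appR : forall t u e, step t u -> step (App e t) (App e u).

Definition steps : term -> term -> Prop := clos_refl_trans term step.

(* The proof follows Tait and Martin-Löf: a parallel reduction [par], the complete development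
   of a set of marked redexes, is shown to satisfy a strip lemma against single steps, and
   confluence follows by tiling.

   What is specific to call-by-need is that whether an application is a redex depends on its
   context (the body must demand its argument inside an evaluation context, and the outer
   partial answer context must match the inner one).  These context conditions are expressed
   by an inductive "walker" [walk] that reads a marked term from the root along its left spine.
   Walks survive the contraction of marked redexes elsewhere in the term, so residuals of
   need-redexes are again need-redexes; contraction commutes with substitution and with itself
   on walkable terms, so the result of a complete development does not depend on the order of
   contraction; and on unmarked terms the walker characterises exactly the redex contexts of
   [beta_need]. *)

From Stdlib Require Import Relations Arith Lia ZArith.

Open Scope bool_scope.

(** * Marked terms *)

(* Applications carry a label; label 0 means unmarked. *)
Inductive mterm : Type :=
| MVar : nat -> mterm
| MLam : mterm -> mterm
| MApp : nat -> mterm -> mterm -> mterm.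

Definition upren (xi : nat -> nat) (i : nat) : nat :=
  match i with 0 => 0 | S j => S (xi j) end.

Fixpoint mren (xi : nat -> nat) (M : mterm) : mterm :=
  match M with
  | MVar i => MVar (xi i)
  | MLam M => MLam (mren (upren xi) M)
  | MApp l M N => MApp l (mren xi M) (mren xi N)
  end.

Definition mup (s : nat -> mterm) (i : nat) : mterm :=
  match i with 0 => MVar 0 | S j => mren S (s j) end.

Fixpoint msubst (s : nat -> mterm) (M : mterm) : mterm :=
  match M with
  | MVar i => s i
  | MLam M => MLam (msubst (mup s) M)
  | MApp l M N => MApp l (msubst s M) (msubst s N)
  end.

Fixpoint upn (k : nat) (s : nat -> mterm) : nat -> mterm :=
  match k with 0 => s | S k => mup (upn k s) end.

Lemma mren_ext : forall M xi zeta, (forall i, xi i = zeta i) -> mren xi M = mren zeta M.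
Proof.
  induction M; intros; simpl; f_equal; auto.
  apply IHM. intros [|i]; simpl; auto.
Qed.

Lemma msubst_ext : forall M s t, (forall i, s i = t i) -> msubst s M = msubst t M.
Proof.
  induction M; intros; simpl; f_equal; auto.
  apply IHM. intros [|i]; simpl; auto. rewrite H; auto.
Qed.

Lemma mren_comp : forall M xi zeta, mren xi (mren zeta M) = mren (fun i => xi (zeta i)) M.
Proof.
  induction M; intros; simpl; f_equal; auto.
  rewrite IHM. apply mren_ext. intros [|i]; simpl; auto.
Qed.

Lemma mren_msubst : forall M xi s, mren xi (msubst s M) = msubst (fun i => mren xi (s i)) M.
Proof.
  induction M; intros; simpl; f_equal; auto.
  rewrite IHM. apply msubst_ext. intros [|i]; simpl; auto.
  rewrite !mren_comp. apply mren_ext. intros; simpl; auto.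
Qed.

Lemma msubst_mren : forall M xi s, msubst s (mren xi M) = msubst (fun i => s (xi i)) M.
Proof.
  induction M; intros; simpl; f_equal; auto.
  rewrite IHM. apply msubst_ext. intros [|i]; simpl; auto.
Qed.

Lemma msubst_comp : forall M s t, msubst s (msubst t M) = msubst (fun i => msubst s (t i)) M.
Proof.
  induction M; intros; simpl; f_equal; auto.
  rewrite IHM. apply msubst_ext. intros [|i]; simpl; auto.
  rewrite msubst_mren, mren_msubst. apply msubst_ext. intros; simpl; auto.
Qed.

Lemma msubst_id : forall M, msubst MVar M = M.
Proof.
  induction M; simpl; f_equal; auto.
  rewrite <- IHM at 2. apply msubst_ext. intros [|i]; simpl; auto.
Qed.

Lemma mren_msubstE : forall M xi, mren xi M = msubst (fun i => MVar (xi i)) M.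
Proof.
  induction M; intros; simpl; f_equal; auto.
  rewrite IHM. apply msubst_ext. intros [|i]; simpl; auto.
Qed.

Lemma mren_id : forall M, mren (fun i => i) M = M.
Proof. intros. rewrite mren_msubstE. apply msubst_id. Qed.

Lemma msubst_mup_mren : forall G s, msubst (mup s) (mren S G) = mren S (msubst s G).
Proof. intros. rewrite msubst_mren, mren_msubst. apply msubst_ext; auto. Qed.

Lemma upn_shifted : forall k s j, upn k s (j + k) = mren (fun i => i + k) (s j).
Proof.
  induction k; intros; simpl.
  - replace (j + 0) with j by lia. rewrite mren_msubstE.
    transitivity (msubst MVar (s j)).
    + symmetry; apply msubst_id.
    + apply msubst_ext; intros; f_equal; lia.
  - replace (j + S k) with (S (j + k)) by lia. simpl. rewrite IHk, mren_comp.
    apply mren_ext; intros; lia.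
Qed.

Fixpoint unmark (M : mterm) : mterm :=
  match M with
  | MVar i => MVar i
  | MLam M => MLam (unmark M)
  | MApp _ M N => MApp 0 (unmark M) (unmark N)
  end.

Fixpoint erase (M : mterm) : term :=
  match M with
  | MVar i => Var i
  | MLam M => Lam (erase M)
  | MApp _ M N => App (erase M) (erase N)
  end.

Fixpoint embed (t : term) : mterm :=
  match t with
  | Var i => MVar i
  | Lam t => MLam (embed t)
  | App t u => MApp 0 (embed t) (embed u)
  end.

Lemma erase_embed : forall t, erase (embed t) = t.
Proof. induction t; simpl; f_equal; auto. Qed.

Lemma embed_erase : forall M, embed (erase M) = unmark M.
Proof. induction M; simpl; f_equal; auto. Qed.

Lemma erase_unmark : forall M, erase (unmark M) = erase M.
Proof. induction M; simpl; f_equal; auto. Qed.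

Lemma unmark_idem : forall M, unmark (unmark M) = unmark M.
Proof. induction M; simpl; f_equal; auto. Qed.

Lemma unmark_embed : forall t, unmark (embed t) = embed t.
Proof. induction t; simpl; f_equal; auto. Qed.

Lemma unmark_mren : forall M xi, unmark (mren xi M) = mren xi (unmark M).
Proof. induction M; intros; simpl; f_equal; auto. Qed.

Lemma unmark_msubst : forall M s, unmark (msubst s M) = msubst (fun i => unmark (s i)) (unmark M).
Proof.
  induction M; intros; simpl; f_equal; auto.
  rewrite IHM. apply msubst_ext. intros [|i]; simpl; auto. apply unmark_mren.
Qed.

Definition shift_var (d c : nat) (i : nat) : nat := if Nat.ltb i c then i else i + d.

Lemma embed_shift : forall t d c, embed (shift d c t) = mren (shift_var d c) (embed t).
Proof.
  induction t; intros; simpl.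
  - unfold shift_var. destruct (Nat.ltb n c); reflexivity.
  - f_equal. rewrite IHt. apply mren_ext. intros [|i]; unfold shift_var; simpl; auto.
    change (S i <? S c) with (i <? c). destruct (Nat.ltb i c); auto.
  - f_equal; auto.
Qed.

Lemma embed_subst : forall t s, embed (subst s t) = msubst (fun i => embed (s i)) (embed t).
Proof.
  induction t; intros; simpl; auto.
  - f_equal. rewrite IHt. apply msubst_ext. intros [|i]; simpl; auto.
    rewrite embed_shift. apply mren_ext. intros; unfold shift_var; simpl. destruct i; simpl; lia.
  - f_equal; auto.
Qed.

(** * Contraction of marked need-redexes *)

Definition need_msub (v : mterm) (k : nat) (i : nat) : mterm :=
  match i with 0 => v | S j => MVar (j + k) end.

(* For a redex [A1[\x.B] A2[v]], [contract_fun 1] descends through [A1], counting the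
   applications of the spine that still wait for their lambda (the redex's own application
   included), until it meets the binder with count 1; [contract_arg] then descends through
   [A2] to [v] and substitutes it in [B], whose other variables are shifted past the [k]
   binders of [A2].  The [MApp 0 _ _] results are junk values for ill-shaped arguments. *)
Fixpoint contract_arg (c k : nat) (G B : mterm) : mterm :=
  match G with
  | MApp l M e => MApp l (contract_arg (S c) k M B) e
  | MLam M => match c with
              | 0 => msubst (need_msub G k) B
              | S c' => MLam (contract_arg c' (S k) M B)
              end
  | MVar i => MApp 0 G B
  end.

Fixpoint contract_fun (j : nat) (F G : mterm) : mterm :=
  match F with
  | MApp l M e => MApp l (contract_fun (S j) M G) e
  | MLam M => match j with
              | 0 => MApp 0 F G
              | S 0 => contract_arg 0 0 G M
              | S (S j') => MLam (contract_fun (S j') M (mren S G))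
              end
  | MVar i => MApp 0 F G
  end.

Fixpoint develop (P : nat -> bool) (M : mterm) : mterm :=
  match M with
  | MVar i => MVar i
  | MLam M => MLam (develop P M)
  | MApp l M N =>
      if P l then contract_fun 1 (develop P M) (develop P N)
      else MApp l (develop P M) (develop P N)
  end.

Lemma unmark_contract_arg : forall G c k B,
  unmark (contract_arg c k G B) = contract_arg c k (unmark G) (unmark B).
Proof.
  induction G; intros; simpl; auto.
  destruct c; simpl; auto.
  - rewrite unmark_msubst. apply msubst_ext. intros [|i]; simpl; auto.
  - f_equal; auto.
  - f_equal; auto.
Qed.

Lemma unmark_contract_fun : forall F j G,
  unmark (contract_fun j F G) = contract_fun j (unmark F) (unmark G).
Proof.
  induction F; intros; simpl; auto.
  - destruct j as [|[|j]]; simpl; auto.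
    + apply unmark_contract_arg.
    + f_equal. rewrite IHF, unmark_mren. auto.
  - f_equal; auto.
Qed.

(** * The walker *)

(* [walk s M] reads [M] down its left spine; in every state [d] counts the applications
   passed whose lambda has not yet been met.
   - [Ans d]: an answer [A[\x.b]].
   - [Fun d]: [A[\x.b]], where [\x] is the lambda met with count 1, the binder of the redex
     whose application is counted in [d].
   - [NeedFun k d]: as [Fun d], with a body of the form [A^down[E[x]]] walked by [InDown k 0 0].
   - [InDown k d n]: inside [A^down[E[x]]], [x] having index [n]; a lambda met with count 0
     belongs to [A^down] and consumes one of the [k] credits, the applications of the
     enclosing [A^up] that close it.
   - [InEval d n]: an evaluation context around the variable of index [n].  In
     [walk_eval_need] the pending applications become the credit of the inner redex: this is
     the side condition that [A^up[A^down]] be an answer context. *)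
Inductive wstate :=
| Ans (d : nat)
| Fun (d : nat)
| NeedFun (k d : nat)
| InDown (k d n : nat)
| InEval (d n : nat).

Inductive walk : wstate -> mterm -> Prop :=
| walk_ans_val : forall b, walk (Ans 0) (MLam b)
| walk_ans_app : forall d l M e, walk (Ans (S d)) M -> walk (Ans d) (MApp l M e)
| walk_ans_lam : forall d M, walk (Ans d) M -> walk (Ans (S d)) (MLam M)
| walk_fun_app : forall d l M e, walk (Fun (S (S d))) M -> walk (Fun (S d)) (MApp l M e)
| walk_fun_lam : forall d M, walk (Fun (S d)) M -> walk (Fun (S (S d))) (MLam M)
| walk_fun_binder : forall B, walk (Fun 1) (MLam B)
| walk_needfun_app : forall k d l M e,
    walk (NeedFun k (S (S d))) M -> walk (NeedFun k (S d)) (MApp l M e)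
| walk_needfun_lam : forall k d M, walk (NeedFun k (S d)) M -> walk (NeedFun k (S (S d))) (MLam M)
| walk_needfun_binder : forall k B, walk (InDown k 0 0) B -> walk (NeedFun k 1) (MLam B)
| walk_down_app : forall k d n l M e, walk (InDown k (S d) n) M -> walk (InDown k d n) (MApp l M e)
| walk_down_lam : forall k d n M, walk (InDown k d (S n)) M -> walk (InDown k (S d) n) (MLam M)
| walk_down_bind : forall k n M, walk (InDown k 0 (S n)) M -> walk (InDown (S k) 0 n) (MLam M)
| walk_down_eval : forall k n M, walk (InEval 0 n) M -> walk (InDown k 0 n) M
| walk_eval_var : forall d n, walk (InEval d n) (MVar n)
| walk_eval_app : forall d n l M e, walk (InEval (S d) n) M -> walk (InEval d n) (MApp l M e)
| walk_eval_lam : forall d n M, walk (InEval d (S n)) M -> walk (InEval (S d) n) (MLam M)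
| walk_eval_need : forall d n l F G,
    walk (NeedFun d 1) F -> walk (InEval 0 n) G -> walk (InEval d n) (MApp l F G).

Ltac apply_walk_rule :=
  first [ apply walk_ans_app; eassumption | apply walk_ans_lam; eassumption
        | apply walk_fun_app; eassumption | apply walk_fun_lam; eassumption
        | apply walk_fun_binder
        | apply walk_needfun_app; eassumption | apply walk_needfun_lam; eassumption
        | apply walk_needfun_binder; eassumption
        | apply walk_down_app; eassumption | apply walk_down_lam; eassumption
        | apply walk_down_bind; eassumption | apply walk_down_eval; eassumption
        | apply walk_eval_app; eassumption | apply walk_eval_lam; eassumption
        | apply walk_eval_need; eassumption ].

Inductive wstate_subst (s : nat -> mterm) : wstate -> wstate -> Prop :=
| wstate_subst_ans : forall d, wstate_subst s (Ans d) (Ans d)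
| wstate_subst_fun : forall d, wstate_subst s (Fun d) (Fun d)
| wstate_subst_needfun : forall k d, wstate_subst s (NeedFun k d) (NeedFun k d)
| wstate_subst_down : forall k d n n',
    s n = MVar n' -> wstate_subst s (InDown k d n) (InDown k d n')
| wstate_subst_eval : forall d n n', s n = MVar n' -> wstate_subst s (InEval d n) (InEval d n').

Lemma walk_msubst : forall st0 M, walk st0 M ->
  forall s st1, wstate_subst s st0 st1 -> walk st1 (msubst s M).
Proof.
  induction 1; intros s st1 Hm; inversion Hm; subst; simpl;
  repeat match goal with H : s _ = MVar _ |- _ => rewrite ?H end;
  try (econstructor; solve [first [apply IHwalk | apply IHwalk1 | apply IHwalk2]; econstructor; simpl;
       repeat match goal with H : s _ = MVar _ |- _ => rewrite H end; reflexivity]).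
  all: try (econstructor; fail).
  all: try (econstructor; [apply IHwalk1; constructor | apply IHwalk2; constructor; auto]).
Qed.

Lemma walk_mren : forall st0 M xi, walk st0 M ->
  match st0 with
  | InDown k d n => walk (InDown k d (xi n)) (mren xi M)
  | InEval d n => walk (InEval d (xi n)) (mren xi M)
  | _ => walk st0 (mren xi M)
  end.
Proof.
  intros. rewrite mren_msubstE. destruct st0; eapply walk_msubst; eauto; constructor; auto.
Qed.

Lemma walk_ans_mren : forall d M xi, walk (Ans d) M -> walk (Ans d) (mren xi M).
Proof. intros. apply (walk_mren _ _ xi H). Qed.

Lemma walk_ans_msubst : forall d M s, walk (Ans d) M -> walk (Ans d) (msubst s M).
Proof. intros. eapply walk_msubst; eauto. constructor. Qed.

Lemma walk_fun_mren : forall d M xi, walk (Fun d) M -> walk (Fun d) (mren xi M).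
Proof. intros. apply (walk_mren _ _ xi H). Qed.

Lemma walk_fun_msubst : forall d M s, walk (Fun d) M -> walk (Fun d) (msubst s M).
Proof. intros. eapply walk_msubst; eauto. constructor. Qed.

Lemma walk_needfun_fun : forall t M, walk t M ->
  match t with NeedFun k d => walk (Fun d) M | _ => True end.
Proof. induction 1; auto; constructor; auto. Qed.

Lemma walk_mono : forall t M, walk t M ->
  match t with
  | NeedFun k d => forall k', k <= k' -> walk (NeedFun k' d) M
  | InDown k d n => forall k', k <= k' -> walk (InDown k' d n) M
  | InEval d n => forall d', d <= d' -> walk (InEval d' n) M
  | _ => True
  end.
Proof.
  induction 1; intros; auto.
  - apply walk_needfun_app. apply IHwalk; auto.
  - apply walk_needfun_lam. apply IHwalk; auto.
  - apply walk_needfun_binder. apply IHwalk; auto.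
  - apply walk_down_app. apply IHwalk; auto.
  - apply walk_down_lam. apply IHwalk; auto.
  - destruct k'. lia. apply walk_down_bind. apply IHwalk. lia.
  - apply walk_down_eval. auto.
  - apply walk_eval_var.
  - apply walk_eval_app. apply IHwalk. lia.
  - destruct d'. lia. apply walk_eval_lam. apply IHwalk. lia.
  - apply walk_eval_need. apply IHwalk1; auto. apply IHwalk2; lia.
Qed.

Lemma walk_unmark_eq : forall s M, walk s M -> forall M', unmark M' = unmark M -> walk s M'.
Proof.
  induction 1; intros M' HM; destruct M'; simpl in HM; try discriminate; inversion HM; subst;
    first [ constructor; auto; fail
          | apply walk_down_eval; apply IHwalk; simpl; auto
          | apply walk_eval_need; auto ].
Qed.

(** * Commutation of contractions *)

Lemma contract_arg_msubst : forall c G, walk (Ans c) G -> forall k B s,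
  msubst (upn k s) (contract_arg c k G B) =
  contract_arg c k (msubst (upn k s) G) (msubst (mup s) B).
Proof.
  intros c G H; remember (Ans c) as x; revert c Heqx.
  induction H; intros c0 Heq; inversion Heq; subst; intros; simpl.
  - rewrite !msubst_comp. apply msubst_ext. intros [|j]; simpl; auto.
    rewrite upn_shifted, msubst_mren. simpl. rewrite mren_msubstE. apply msubst_ext; auto.
  - f_equal. apply IHwalk; auto.
  - f_equal. apply (IHwalk d eq_refl (S k)).
Qed.

Lemma contract_fun_msubst : forall j F, walk (Fun j) F -> forall G s, walk (Ans 0) G ->
  msubst s (contract_fun j F G) = contract_fun j (msubst s F) (msubst s G).
Proof.
  intros j F H; remember (Fun j) as x; revert j Heqx.
  induction H; intros j0 Heq; inversion Heq; subst; intros; simpl.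
  - f_equal. apply IHwalk; auto.
  - f_equal. rewrite IHwalk; auto.
    + f_equal. apply msubst_mup_mren.
    + apply walk_ans_mren; auto.
  - apply (contract_arg_msubst 0 G H 0).
Qed.

Lemma contract_fun_mren : forall j F G xi, walk (Fun j) F -> walk (Ans 0) G ->
  mren xi (contract_fun j F G) = contract_fun j (mren xi F) (mren xi G).
Proof. intros. rewrite !mren_msubstE. apply contract_fun_msubst; auto. Qed.

Lemma contract_arg_need_msubst : forall c S0, walk (Ans c) S0 -> forall v k1 k m B,
  msubst (upn m (need_msub v k1)) (contract_arg c (S k + m) S0 B) =
  contract_arg c (k + k1 + m) (msubst (upn m (need_msub v k1)) S0) B.
Proof.
  intros c S0 H; remember (Ans c) as x; revert c Heqx.
  induction H; intros c0 Heq; inversion Heq; subst; intros; simpl.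
  - rewrite msubst_comp. apply msubst_ext. intros [|j]; simpl; auto.
    replace (j + S (k + m)) with ((S (j + k)) + m) by lia.
    rewrite upn_shifted. simpl. f_equal. lia.
  - f_equal. apply IHwalk; auto.
  - f_equal. replace (S (S (k + m))) with (S k + S m) by lia.
    replace (S (k + k1 + m)) with (k + k1 + S m) by lia.
    apply (IHwalk d eq_refl v k1 k (S m)).
Qed.

Lemma contract_arg_assoc_gen : forall c1 e, walk (Ans c1) e ->
  forall c S0 k k1 B, walk (Ans c) S0 ->
  contract_arg (c + c1) (k + k1) (contract_arg c1 k1 e S0) B =
  contract_arg c1 k1 e (contract_arg c (S k) S0 B).
Proof.
  intros c1 e H; remember (Ans c1) as x; revert c1 Heqx.
  induction H; intros c0 Heq; inversion Heq; subst; intros; simpl.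
  - pose proof (contract_arg_need_msubst c S0 H (MLam b) k1 k 0 B) as E. simpl in E.
    rewrite !Nat.add_0_r in *. rewrite E. reflexivity.
  - f_equal. rewrite <- Nat.add_succ_r. apply IHwalk; auto.
  - rewrite Nat.add_succ_r. simpl. f_equal.
    replace (S (k + k1)) with (k + S k1) by lia. apply IHwalk; auto.
Qed.

Lemma contract_arg_assoc : forall e S0 c k B, walk (Ans 0) e -> walk (Ans c) S0 ->
  contract_arg c k (contract_arg 0 0 e S0) B = contract_arg 0 0 e (contract_arg c (S k) S0 B).
Proof.
  intros. pose proof (contract_arg_assoc_gen 0 e H c S0 k 0 B H0). rewrite !Nat.add_0_r in H1. auto.
Qed.

Lemma contract_fun_contract_arg : forall j M, walk (Fun j) M ->
  forall c k B e, walk (Ans (j + c)) M -> walk (Ans 0) e ->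
  contract_fun j (contract_arg (j + c) k M B) e = contract_arg (j + c - 1) k (contract_fun j M e) B.
Proof.
  intros j M H; remember (Fun j) as x; revert j Heqx.
  induction H; intros j0 Heq; inversion Heq; subst; intros; simpl.
  - inversion H0; subst. f_equal.
    replace (S (S (d + c))) with (S (S d) + c) by lia.
    rewrite IHwalk; auto. f_equal. lia.
  - inversion H0; subst. simpl. f_equal.
    replace (S (d + c)) with (S d + c) by lia.
    rewrite IHwalk; auto.
    + f_equal. lia.
    + apply walk_ans_mren; auto.
  - inversion H; subst. rewrite Nat.sub_0_r.
    symmetry. apply contract_arg_assoc; auto.
Qed.

Lemma contract_arg_contract_fun : forall c e, walk (Ans c) e ->
  forall k S0 d G0, walk (Fun d) S0 -> walk (Ans 0) G0 -> 1 <= d ->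
  contract_fun (d + c) (contract_arg c k e S0) (mren (fun i => i + k) G0) =
  contract_arg c k e (contract_fun d S0 (mren S G0)).
Proof.
  intros c e H; remember (Ans c) as x; revert c Heqx.
  induction H; intros c0 Heq; inversion Heq; subst; intros; simpl.
  - rewrite Nat.add_0_r, contract_fun_msubst; auto.
    + f_equal. rewrite msubst_mren, mren_msubstE. apply msubst_ext; intros; simpl; auto.
    + apply walk_ans_mren; auto.
  - f_equal. rewrite <- Nat.add_succ_r. apply IHwalk; auto.
  - destruct d0 as [|d0]; [lia|]. replace (S d0 + S d) with (S (S (d0 + d))) by lia. simpl. f_equal.
    replace (S (d0 + d)) with (S d0 + d) by lia.
    rewrite mren_comp, <- IHwalk; auto. f_equal. apply mren_ext. intros; lia.
Qed.

Lemma contract_fun_contract_fun : forall j M, walk (Fun j) M ->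
  forall d G e, 1 <= d -> walk (Fun (j + d)) M -> walk (Ans 0) G -> walk (Ans 0) e ->
  contract_fun j (contract_fun (j + d) M G) e = contract_fun (j + d - 1) (contract_fun j M e) G.
Proof.
  intros j M H; remember (Fun j) as x; revert j Heqx.
  induction H; intros j0 Heq; inversion Heq; subst; intros; simpl.
  - inversion H1; subst. f_equal.
    replace (S (S (d + d0))) with (S (S d) + d0) by lia.
    rewrite IHwalk; auto. replace (S (S d) + d0 - 1) with (S (S d + d0 - 1)) by lia. reflexivity.
  - inversion H1; subst. simpl.
    replace (d + d0) with (S (d + d0 - 1)) by lia. simpl. f_equal.
    replace (S (S (d + d0 - 1))) with (S d + d0) by lia.
    rewrite IHwalk; auto.
    + f_equal. lia.
    + apply walk_ans_mren; auto.
    + apply walk_ans_mren; auto.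
  - destruct d as [|d]; [lia|]. simpl. inversion H0; subst.
    pose proof (contract_arg_contract_fun 0 e H2 0 B (S d) G H5 H1) as E.
    rewrite Nat.add_0_r in E. replace (mren (fun i : nat => i + 0) G) with G in E.
    + rewrite E by lia. replace (S d - 0) with (S d) by lia. reflexivity.
    + rewrite <- (mren_id G) at 1. apply mren_ext. intros; lia.
Qed.

(** * Contraction preserves walks *)

Definition wstate_at (u : wstate) (c m : nat) : wstate :=
  match u with
  | Ans d => Ans (c + d)
  | Fun d => Fun (c + d)
  | NeedFun k d => NeedFun k (c + d)
  | InDown k d _ => InDown k (c + d) m
  | InEval d _ => InEval (c + d) m
  end.

Definition wstate_ok (u : wstate) : Prop :=
  match u with Fun d => 1 <= d | NeedFun _ d => 1 <= d | _ => True end.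

Lemma walk_wstate_ok : forall u M, walk u M -> wstate_ok u.
Proof. induction 1; simpl; auto; lia. Qed.

Lemma walk_contract_arg : forall c a, walk (Ans c) a ->
  forall k B u n0, walk (wstate_at u 0 (S n0)) B ->
  walk (wstate_at u c (k + n0)) (contract_arg c k a B).
Proof.
  intros c a H; remember (Ans c) as x; revert c Heqx.
  induction H; intros c0 Heq; inversion Heq; subst; intros k B0 u n0 HB; simpl.
  - eapply walk_msubst; eauto. destruct u; simpl; constructor; simpl; f_equal; lia.
  - assert (wstate_ok (wstate_at u 0 (S n0))) by (eapply walk_wstate_ok; eauto).
    specialize (IHwalk _ eq_refl k B0 u n0 HB).
    destruct u; simpl in *.
    + apply walk_ans_app; auto.
    + replace (c0 + d) with (S (c0 + d - 1)) by lia. apply walk_fun_app.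
      replace (S (S (c0 + d - 1))) with (S (c0 + d)) by lia. auto.
    + replace (c0 + d) with (S (c0 + d - 1)) by lia. apply walk_needfun_app.
      replace (S (S (c0 + d - 1))) with (S (c0 + d)) by lia. auto.
    + apply walk_down_app; auto.
    + apply walk_eval_app; auto.
  - assert (wstate_ok (wstate_at u 0 (S n0))) by (eapply walk_wstate_ok; eauto).
    specialize (IHwalk _ eq_refl (S k) B0 u n0 HB).
    replace (S k + n0) with (S (k + n0)) in IHwalk by lia.
    destruct u; simpl in *.
    + apply walk_ans_lam; auto.
    + replace (S (d + d0)) with (S (S (d + d0 - 1))) by lia. apply walk_fun_lam.
      replace (S (d + d0 - 1)) with (d + d0) by lia. auto.
    + replace (S (d + d0)) with (S (S (d + d0 - 1))) by lia. apply walk_needfun_lam.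
      replace (S (d + d0 - 1)) with (d + d0) by lia. auto.
    + apply walk_down_lam; auto.
    + apply walk_eval_lam; auto.
Qed.

Definition credit (t : wstate) : nat :=
  match t with
  | Ans d | Fun d | InEval d _ => d
  | NeedFun k d | InDown k d _ => d + k
  end.

Definition wstate_dec (m : nat) (t : wstate) : wstate :=
  match t with
  | Ans d => Ans (pred d)
  | Fun d => Fun (pred d)
  | NeedFun k d => if m <? d then NeedFun k (pred d) else NeedFun (pred k) d
  | InDown k d n => if m <? d then InDown k (pred d) n else InDown (pred k) d n
  | InEval d n => InEval (pred d) n
  end.

(* The state of a walk after a redex whose binder is met [m] pending applications below the
   walk's start has been contracted: the redex's application and binder disappear, lowering
   the count, or the credit when [m] lies beyond the local count.  A walk that ends before
   that depth ([credit t <= m]) is unaffected. *)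
Definition wstate_decp (m : nat) (t : wstate) : wstate :=
  if m <? credit t then wstate_dec m t else t.

Definition wstate_fits (m : nat) (t : wstate) : Prop :=
  match t with
  | Ans d => m < d
  | Fun d => S m < d \/ d <= m
  | NeedFun k d => S m <> d
  | _ => True
  end.

Ltac case_ltb := repeat match goal with
  | |- context[?x <? ?y] => destruct (Nat.ltb_spec0 x y)
  | H : context[?x <? ?y] |- _ => destruct (Nat.ltb_spec0 x y) end; simpl in *.

Lemma walk_contract_binder : forall t B a, walk t (MLam B) -> walk (Ans 0) a -> wstate_fits 0 t ->
  walk (wstate_decp 0 t) (contract_arg 0 0 a B).
Proof.
  intros t B a HB Ha Hok. unfold wstate_decp.
  inversion HB; subst; simpl in *; case_ltb; try lia.
  all: lazymatch goal with
       | |- walk (Ans ?d) _ => apply (walk_contract_arg 0 a Ha 0 B (Ans d) 0)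
       | |- walk (Fun ?d) _ => apply (walk_contract_arg 0 a Ha 0 B (Fun d) 0)
       | |- walk (NeedFun ?k ?d) _ => apply (walk_contract_arg 0 a Ha 0 B (NeedFun k d) 0)
       | |- walk (InDown ?k ?d ?n) _ => apply (walk_contract_arg 0 a Ha 0 B (InDown k d 0) n)
       | |- walk (InEval ?d ?n) _ => apply (walk_contract_arg 0 a Ha 0 B (InEval d 0) n)
       end; simpl;
  first [assumption | match goal with H : walk (InEval 0 _) (MLam _) |- _ => inversion H end].
Qed.

Ltac close_walk :=
  unfold wstate_decp in *; simpl in *; rewrite ?Nat.sub_0_r in *; case_ltb; try lia;
  first [ apply_walk_rule
        | match goal with x : nat |- _ => destruct x; [lia | simpl in *; apply_walk_rule] end ].

Lemma walk_contract_fun : forall t M, walk t M -> forall j a, walk (Fun j) M -> walk (Ans 0) a ->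
  1 <= j -> wstate_fits (j - 1) t -> walk (wstate_decp (j - 1) t) (contract_fun j M a).
Proof.
  induction 1; intros j a HF Ha Hj Hok; simpl in Hok.
  all: try solve [lia | inversion HF].
  all: lazymatch goal with
       | |- walk _ (contract_fun _ (MLam _) _) =>
           destruct j as [|[|j]];
           [lia | apply walk_contract_binder; [apply_walk_rule | exact Ha | exact Hok] |];
           try specialize (IHwalk (S j) (mren S a) ltac:(inversion HF; assumption)
                             (walk_ans_mren _ _ _ Ha) ltac:(lia) ltac:(simpl; auto; lia))
       | |- walk _ (contract_fun _ (MApp _ _ _) _) =>
           destruct j as [|j]; [lia|];
           try specialize (IHwalk (S (S j)) a ltac:(inversion HF; assumption) Ha
                             ltac:(lia) ltac:(simpl; auto; lia));
           try specialize (IHwalk1 (S (S j)) a ltac:(inversion HF; assumption) Ha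
                             ltac:(lia) ltac:(simpl; auto; lia))
       | _ => specialize (IHwalk j a HF Ha Hj I)
       end.
  all: close_walk.
Qed.

Definition not_ans (t : wstate) : Prop := match t with Ans _ => False | _ => True end.

Lemma walk_contract_arg_not_ans : forall c a, walk (Ans c) a ->
  forall t k B, walk t a -> not_ans t -> credit t <= c -> walk t (contract_arg c k a B).
Proof.
  intros c a H; remember (Ans c) as x; revert c Heqx.
  induction H; intros c0 Heq; inversion Heq; subst; intros t k0 B0 Hw Hn Hu; simpl in *.
  - inversion Hw; subst; simpl in *; try contradiction; try lia.
    inversion H.
  - inversion Hw; subst; simpl in *; try contradiction.
    + constructor. apply IHwalk; auto; simpl; lia.
    + constructor. apply IHwalk; auto; simpl; lia.
    + constructor. apply IHwalk; auto; simpl; lia.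
    + apply walk_down_eval. inversion H0; subst.
      * apply walk_eval_app. apply IHwalk; auto; simpl; lia.
      * apply walk_eval_need; auto. apply IHwalk; auto; simpl; lia.
    + apply walk_eval_app. apply IHwalk; auto; simpl; lia.
    + apply walk_eval_need; auto. apply IHwalk; auto; simpl; lia.
  - inversion Hw; subst; simpl in *; try contradiction.
    all: solve [ constructor; apply IHwalk; auto; simpl; lia | apply walk_fun_binder
               | match goal with H : walk (InEval 0 _) (MLam _) |- _ => inversion H end ].
Qed.

Lemma walk_eval_contract_arg : forall c a, walk (Ans c) a ->
  forall n k B d, walk (InEval c n) a -> walk (InEval (d + c) n) (contract_arg c k a B).
Proof.
  intros c a H; remember (Ans c) as x; revert c Heqx.
  induction H; intros c0 Heq; inversion Heq; subst; intros n k B0 d0 Hw; simpl.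
  - inversion Hw.
  - inversion Hw; subst.
    + apply walk_eval_app. replace (S (d0 + c0)) with (d0 + S c0) by lia. apply IHwalk; auto.
    + apply walk_eval_need; auto.
      assert (walk (NeedFun c0 1) (contract_arg (S c0) k M B0))
        by (apply walk_contract_arg_not_ans; simpl; auto; lia).
      apply (walk_mono _ _ H0). lia.
  - inversion Hw; subst. replace (d0 + S d) with (S (d0 + d)) by lia.
    apply walk_eval_lam. apply IHwalk; auto.
Qed.

Lemma walk_eval_contract_fun : forall j f, walk (Fun j) f ->
  forall a n d, walk (Ans 0) a -> walk (InEval 0 n) a ->
  walk (InEval (d + (j - 1)) n) (contract_fun j f a).
Proof.
  intros j f H; remember (Fun j) as x; revert j Heqx.
  induction H; intros j0 Heq; inversion Heq; subst; intros a n d0 Ha Hw; simpl.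
  - apply walk_eval_app. replace (S (d0 + (d - 0))) with (d0 + (S (S d) - 1)) by lia.
    apply IHwalk; auto.
  - replace (d0 + S d) with (S (d0 + (S d - 1))) by lia. apply walk_eval_lam. apply IHwalk; auto.
    + apply walk_ans_mren; auto.
    + apply (walk_mren _ _ S Hw).
  - exact (walk_eval_contract_arg 0 a Ha n 0 B d0 Hw).
Qed.

Lemma walk_contract_redex : forall s M, walk s M -> forall l f a, M = MApp l f a ->
  walk (Fun 1) f -> walk (Ans 0) a -> walk s (contract_fun 1 f a).
Proof.
  induction 1; intros l0 f a HM Hf Ha; try discriminate; inversion HM; subst.
  all: first
    [ apply walk_down_eval; eapply IHwalk; eauto
    | match goal with
      | Hn : walk (InEval 0 ?n) ?b |- walk (InEval ?d _) (contract_fun 1 _ ?b) =>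
          pose proof (walk_eval_contract_fun 1 _ Hf b n d Ha Hn) as Hc;
          rewrite Nat.add_0_r in Hc; exact Hc
      end
    | match goal with
      | H : walk _ ?g |- walk _ (contract_fun 1 ?g _) =>
          pose proof (walk_contract_fun _ _ H 1 a Hf Ha (le_n 1) ltac:(simpl; auto; lia)) as Hc
      end;
      unfold wstate_decp in Hc; simpl in Hc; case_ltb; try lia; auto ].
Qed.

(** * Developments *)

Inductive mstep (P : nat -> bool) : mterm -> mterm -> Prop :=
| mstep_root : forall l F G, P l = true -> walk (Fun 1) F -> walk (Ans 0) G ->
    mstep P (MApp l F G) (contract_fun 1 F G)
| mstep_lam : forall M M', mstep P M M' -> mstep P (MLam M) (MLam M')
| mstep_appL : forall l M M' N, mstep P M M' -> mstep P (MApp l M N) (MApp l M' N)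
| mstep_appR : forall l M N N', mstep P N N' -> mstep P (MApp l M N) (MApp l M N').

Definition msteps P := clos_refl_trans mterm (mstep P).

Lemma mstep_mono : forall P Q, (forall l, P l = true -> Q l = true) ->
  forall M M', mstep P M M' -> mstep Q M M'.
Proof. intros P Q HPQ. induction 1; constructor; auto. Qed.

Lemma msteps_mono : forall P Q, (forall l, P l = true -> Q l = true) ->
  forall M M', msteps P M M' -> msteps Q M M'.
Proof.
  intros P Q HPQ. induction 1.
  - apply rt_step. eapply mstep_mono; eauto.
  - apply rt_refl.
  - eapply rt_trans; eauto.
Qed.

Lemma msteps_lam : forall P M M', msteps P M M' -> msteps P (MLam M) (MLam M').
Proof. induction 1. apply rt_step; constructor; auto. apply rt_refl. eapply rt_trans; eauto. Qed.

Lemma msteps_appL : forall P l M M' N, msteps P M M' -> msteps P (MApp l M N) (MApp l M' N).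
Proof. induction 1. apply rt_step; constructor; auto. apply rt_refl. eapply rt_trans; eauto. Qed.

Lemma msteps_appR : forall P l M N N', msteps P N N' -> msteps P (MApp l M N) (MApp l M N').
Proof. induction 1. apply rt_step; constructor; auto. apply rt_refl. eapply rt_trans; eauto. Qed.

Lemma walk_mstep : forall P M M', mstep P M M' -> forall s, walk s M -> walk s M'.
Proof.
  induction 1; intros s Hw.
  - eapply walk_contract_redex; eauto.
  - inversion Hw; subst; try (constructor; auto; fail). inversion H0.
  - inversion Hw; subst; try (constructor; auto; fail).
    all: try (apply walk_down_eval; inversion H0; subst;
              [apply walk_eval_app; auto | apply walk_eval_need; auto]).
    all: try (apply walk_eval_need; auto).
  - inversion Hw; subst; try (constructor; auto; fail).
    all: try (apply walk_down_eval; inversion H0; subst;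
              [apply walk_eval_app; auto | apply walk_eval_need; auto]).
    all: try (apply walk_eval_need; auto).
Qed.

Lemma walk_msteps : forall P M M', msteps P M M' -> forall s, walk s M -> walk s M'.
Proof. induction 1; intros; eauto. eapply walk_mstep; eauto. Qed.

(* Marked applications have the shape of a redex, whatever their context. *)
Fixpoint well_marked (M : mterm) : Prop :=
  match M with
  | MVar _ => True
  | MLam M => well_marked M
  | MApp l M N => well_marked M /\ well_marked N /\ (l <> 0 -> walk (Fun 1) M /\ walk (Ans 0) N)
  end.

Lemma well_marked_mren : forall M xi, well_marked M -> well_marked (mren xi M).
Proof.
  induction M; intros; simpl in *; auto.
  destruct H as [H1 [H2 H3]]. repeat split; auto.
  - apply walk_fun_mren. apply H3; auto.
  - apply walk_ans_mren. apply H3; auto.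
Qed.

Lemma well_marked_msubst : forall M s, well_marked M -> (forall i, well_marked (s i)) ->
  well_marked (msubst s M).
Proof.
  induction M; intros; simpl in *; auto.
  - apply IHM; auto. intros [|i]; simpl; auto. apply well_marked_mren; auto.
  - destruct H as [H1 [H2 H3]]. repeat split; auto.
    + apply walk_fun_msubst. apply H3; auto.
    + apply walk_ans_msubst. apply H3; auto.
Qed.

Lemma well_marked_contract_arg : forall c G, walk (Ans c) G -> forall k B,
  well_marked G -> well_marked B -> well_marked (contract_arg c k G B).
Proof.
  intros c G H; remember (Ans c) as x; revert c Heqx.
  induction H; intros c0 Heq; inversion Heq; subst; intros; simpl in *.
  - apply well_marked_msubst; auto. intros [|i]; simpl; auto.
  - destruct H0 as [H2 [H3 H4]]. split; [|split]; try (apply (IHwalk _ eq_refl); auto); auto.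
    intros Hl. split.
    + apply walk_contract_arg_not_ans; simpl; auto. apply H4; auto. lia.
    + apply H4; auto.
  - apply (IHwalk _ eq_refl); auto.
Qed.

Lemma well_marked_contract_fun : forall j F, walk (Fun j) F -> forall G,
  well_marked F -> well_marked G -> walk (Ans 0) G -> well_marked (contract_fun j F G).
Proof.
  intros j F H; remember (Fun j) as x; revert j Heqx.
  induction H; intros j0 Heq; inversion Heq; subst; intros; simpl in *.
  - destruct H0 as [H3 [H4 H5]]. split; [|split]; try (apply (IHwalk _ eq_refl); auto); auto.
    intros Hl. specialize (H5 Hl). destruct H5. split; auto.
    pose proof (walk_contract_fun _ _ H0 (S (S d)) G H H2 ltac:(lia) ltac:(simpl; lia)).
    unfold wstate_decp in H6; simpl in H6. case_ltb; try lia. auto.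
  - apply (IHwalk _ eq_refl); auto.
    + apply well_marked_mren; auto.
    + apply walk_ans_mren; auto.
  - apply well_marked_contract_arg; auto.
Qed.

Lemma well_marked_mstep : forall P M M', mstep P M M' -> well_marked M -> well_marked M'.
Proof.
  induction 1; intros; simpl in *.
  - destruct H2 as [H3 [H4 _]]. apply well_marked_contract_fun; auto.
  - auto.
  - destruct H0 as [H1 [H2 H3]]. split; [|split]; auto.
    intros Hl; destruct (H3 Hl); split; auto.
    eapply walk_mstep; eauto.
  - destruct H0 as [H1 [H2 H3]]. split; [|split]; auto.
    intros Hl; destruct (H3 Hl); split; auto.
    eapply walk_mstep; eauto.
Qed.

Lemma well_marked_msteps : forall P M M', msteps P M M' -> well_marked M -> well_marked M'.
Proof. induction 1; intros; eauto. eapply well_marked_mstep; eauto. Qed.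

Section Development.

Variable P : nat -> bool.
Hypothesis P_unmarked : P 0 = false.

Lemma msteps_develop : forall M, well_marked M -> msteps P M (develop P M).
Proof.
  induction M; intros Hw; simpl in *.
  - apply rt_refl.
  - apply msteps_lam; auto.
  - destruct Hw as [H1 [H2 H3]].
    assert (msteps P (MApp n M1 M2) (MApp n (develop P M1) (develop P M2))).
    { eapply rt_trans. apply msteps_appL; eauto. apply msteps_appR; eauto. }
    destruct (P n) eqn:E; auto.
    eapply rt_trans; eauto. apply rt_step. constructor; auto.
    + eapply walk_msteps. apply IHM1; auto. apply H3. intro; subst; congruence.
    + eapply walk_msteps. apply IHM2; auto. apply H3. intro; subst; congruence.
Qed.

Lemma walk_develop : forall M s, well_marked M -> walk s M -> walk s (develop P M).
Proof. intros. eapply walk_msteps; eauto. apply msteps_develop; auto. Qed.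

Lemma develop_mren : forall M xi, well_marked M -> develop P (mren xi M) = mren xi (develop P M).
Proof.
  induction M; intros xi Hw; simpl in *; auto.
  - f_equal; auto.
  - destruct Hw as [H1 [H2 H3]]. rewrite IHM1, IHM2 by auto.
    destruct (P n) eqn:E; auto.
    destruct H3 as [HF HG]; [intros ->; congruence|].
    rewrite contract_fun_mren; auto; apply walk_develop; auto.
Qed.

Lemma develop_msubst : forall M s, well_marked M -> (forall i, well_marked (s i)) ->
  develop P (msubst s M) = msubst (fun i => develop P (s i)) (develop P M).
Proof.
  induction M; intros s Hw Hs; simpl in *; auto.
  - f_equal. rewrite IHM; auto.
    + apply msubst_ext. intros [|i]; simpl; auto. apply develop_mren; auto.
    + intros [|i]; simpl; auto. apply well_marked_mren; auto.
  - destruct Hw as [H1 [H2 H3]]. rewrite IHM1, IHM2 by auto.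
    destruct (P n) eqn:E; auto.
    destruct H3 as [HF HG]; [intros ->; congruence|].
    rewrite contract_fun_msubst; auto; apply walk_develop; auto.
Qed.

Lemma develop_contract_arg : forall c G, walk (Ans c) G -> well_marked G ->
  forall k B, well_marked B ->
  develop P (contract_arg c k G B) = contract_arg c k (develop P G) (develop P B).
Proof.
  intros c G H; remember (Ans c) as x; revert c Heqx.
  induction H; intros c0 Heq; inversion Heq; subst; intros; simpl in *.
  - rewrite develop_msubst; auto.
    + apply msubst_ext. intros [|i]; simpl; auto.
    + intros [|i]; simpl; auto.
  - destruct H0 as [H2 [H3 H4]]. rewrite (IHwalk _ eq_refl) by auto.
    destruct (P l) eqn:E; auto.
    destruct H4 as [HF HG]; [intros ->; congruence|].
    pose proof (contract_fun_contract_arg 1 (develop P M) (walk_develop _ _ H2 HF) c0 k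
                  (develop P B) (develop P e)) as E5.
    simpl in E5. rewrite E5, Nat.sub_0_r; auto; apply walk_develop; auto.
  - rewrite (IHwalk _ eq_refl) by auto. auto.
Qed.

Lemma develop_contract_fun : forall j F, walk (Fun j) F -> well_marked F ->
  forall G, well_marked G -> walk (Ans 0) G ->
  develop P (contract_fun j F G) = contract_fun j (develop P F) (develop P G).
Proof.
  intros j F H; remember (Fun j) as x; revert j Heqx.
  induction H; intros j0 Heq; inversion Heq; subst; intros; simpl in *.
  - destruct H0 as [H3 [H4 H5]]. rewrite (IHwalk _ eq_refl) by auto.
    destruct (P l) eqn:E; auto.
    destruct H5 as [HF HG]; [intros ->; congruence|].
    pose proof (contract_fun_contract_fun 1 (develop P M) (walk_develop _ _ H3 HF) (S d)
                  (develop P G) (develop P e)) as E2.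
    simpl in E2. rewrite E2; auto; try lia; apply walk_develop; auto.
  - rewrite (IHwalk _ eq_refl); auto.
    + f_equal. f_equal. apply develop_mren; auto.
    + apply well_marked_mren; auto.
    + apply walk_ans_mren; auto.
  - apply develop_contract_arg; auto.
Qed.

Lemma develop_mstep : forall M M', mstep P M M' -> well_marked M -> develop P M' = develop P M.
Proof.
  induction 1; intros Hw; simpl in *.
  - destruct Hw as [H2 [H3 H4]]. rewrite H. apply develop_contract_fun; auto.
  - f_equal; auto.
  - destruct Hw as [H2 [H3 H4]]. rewrite IHmstep; auto.
  - destruct Hw as [H2 [H3 H4]]. rewrite IHmstep; auto.
Qed.

Lemma develop_msteps : forall M M', msteps P M M' -> well_marked M -> develop P M' = develop P M.
Proof.
  induction 1; intros Hw; auto.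
  - apply develop_mstep; auto.
  - rewrite IHclos_refl_trans2. apply IHclos_refl_trans1; auto. eapply well_marked_msteps; eauto.
Qed.

End Development.

(** * Needed markings *)

(* Every marked application is a need-redex in its context: [k] counts the applications
   above the root of [M], along the spine, whose lambdas are still to come; they are the credit
   of the inner partial answer context of a redex at the root. *)
Fixpoint need_marked (k : nat) (M : mterm) : Prop :=
  match M with
  | MVar _ => True
  | MLam M => need_marked (pred k) M
  | MApp l M N =>
      need_marked (S k) M /\ need_marked 0 N /\
      (l <> 0 -> walk (NeedFun k 1) M /\ walk (Ans 0) N)
  end.

Lemma need_marked_well_marked : forall M k, need_marked k M -> well_marked M.
Proof.
  induction M; intros; simpl in *; eauto.
  destruct H as [H1 [H2 H3]]. split; [|split]; eauto.
  intros Hl; destruct (H3 Hl); split; auto. apply (walk_needfun_fun _ _ H).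
Qed.

Lemma need_marked_mono : forall M k k', need_marked k M -> k <= k' -> need_marked k' M.
Proof.
  induction M; intros; simpl in *; auto.
  - apply IHM with (pred k); auto; lia.
  - destruct H as [H1 [H2 H3]]. split; [|split]; auto.
    + apply IHM1 with (S k); auto; lia.
    + intros Hl; destruct (H3 Hl); split; auto. apply (walk_mono _ _ H). auto.
Qed.

Lemma need_marked_embed : forall t k, need_marked k (embed t).
Proof. induction t; intros; simpl; auto. repeat split; auto; intros; lia. Qed.

Lemma need_marked_mren : forall M k xi, need_marked k M -> need_marked k (mren xi M).
Proof.
  induction M; intros; simpl in *; auto.
  destruct H as [H1 [H2 H3]]. split; [|split]; auto.
  intros Hl; destruct (H3 Hl); split; auto.
  - apply (walk_mren _ _ xi H).
  - apply walk_ans_mren; auto.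
Qed.

Lemma need_marked_msubst : forall M k s, need_marked k M -> (forall i k', need_marked k' (s i)) ->
  need_marked k (msubst s M).
Proof.
  induction M; intros; simpl in *; auto.
  - apply IHM; auto. intros [|i] k'; simpl; auto. apply need_marked_mren; auto.
  - destruct H as [H1 [H2 H3]]. split; [|split]; auto.
    intros Hl; destruct (H3 Hl); split; auto.
    + eapply walk_msubst; eauto. constructor.
    + apply walk_ans_msubst; auto.
Qed.

Lemma need_marked_contract_arg : forall c G, walk (Ans c) G ->
  forall kk k' B, need_marked c G -> need_marked k' B -> need_marked (k' + c) (contract_arg c kk G B).
Proof.
  intros c G H; remember (Ans c) as x; revert c Heqx.
  induction H; intros c0 Heq; inversion Heq; subst; intros; simpl in *.
  - rewrite Nat.add_0_r. apply need_marked_msubst; auto. intros [|i] k''; simpl; auto.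
    apply need_marked_mono with 0; auto; lia.
  - destruct H0 as [H2 [H3 H4]]. split; [|split]; auto.
    + replace (S (k' + c0)) with (k' + S c0) by lia. apply (IHwalk _ eq_refl); auto.
    + intros Hl; destruct (H4 Hl); split; auto.
      assert (walk (NeedFun c0 1) (contract_arg (S c0) kk M B))
        by (apply walk_contract_arg_not_ans; simpl; auto; lia).
      apply (walk_mono _ _ H6). lia.
  - replace (pred (k' + S d)) with (k' + d) by lia. apply (IHwalk _ eq_refl); auto.
Qed.

Lemma need_marked_contract_fun : forall j F, walk (Fun j) F ->
  forall k G, need_marked (k + j) F -> need_marked 0 G -> walk (Ans 0) G -> 1 <= j ->
  need_marked (k + j - 1) (contract_fun j F G).
Proof.
  intros j F H; remember (Fun j) as x; revert j Heqx.
  induction H; intros j0 Heq; inversion Heq; subst; intros; simpl in *.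
  - destruct H0 as [H4 [H5 H6]]. split; [|split]; auto.
    + replace (S (k + S d - 1)) with (k + S (S d) - 1) by lia. apply (IHwalk _ eq_refl); auto.
      replace (k + S (S d)) with (S (k + S d)) by lia. auto.
    + intros Hl; destruct (H6 Hl); split; auto.
      pose proof (walk_contract_fun _ _ H0 (S (S d)) G H H2 ltac:(lia) ltac:(simpl; lia)).
      unfold wstate_decp in H8; simpl in H8. case_ltb; try lia.
      replace (k + S d - 1) with (pred (k + S d)) by lia. auto.
  - replace (pred (k + S (S d) - 1)) with (k + S d - 1) by lia.
    apply (IHwalk _ eq_refl); auto.
    + replace (k + S d) with (pred (k + S (S d))) by lia. auto.
    + apply need_marked_mren; auto.
    + apply walk_ans_mren; auto.
    + lia.
  - replace (k + 1 - 1) with (k + 0) by lia. apply need_marked_contract_arg; auto.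
    replace (pred (k + 1)) with k in H by lia. auto.
Qed.

Lemma need_marked_mstep : forall P, P 0 = false ->
  forall M M', mstep P M M' -> forall k, need_marked k M -> need_marked k M'.
Proof.
  intros P HP0. induction 1; intros k Hg; simpl in *.
  - destruct Hg as [H2 [H3 H4]].
    destruct H4 as [HF HG]; [intros ->; congruence|].
    pose proof (need_marked_contract_fun 1 F H0 k G ltac:(rewrite Nat.add_1_r; auto) H3 H1
                  ltac:(lia)) as Hk.
    replace (k + 1 - 1) with k in Hk by lia. auto.
  - auto.
  - destruct Hg as [H2 [H3 H4]]. split; [|split]; auto.
    intros Hl; destruct (H4 Hl); split; auto. eapply walk_mstep; eauto.
  - destruct Hg as [H2 [H3 H4]]. split; [|split]; auto.
    intros Hl; destruct (H4 Hl); split; auto. eapply walk_mstep; eauto.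
Qed.

Lemma need_marked_msteps : forall P, P 0 = false ->
  forall M M', msteps P M M' -> forall k, need_marked k M -> need_marked k M'.
Proof. intros P HP. induction 1; intros; eauto. eapply need_marked_mstep; eauto. Qed.

(** * Answer and evaluation contexts *)

Lemma comp_assoc : forall A B C, comp (comp A B) C = comp A (comp B C).
Proof. induction A; intros; simpl; f_equal; auto. Qed.

Lemma comp_hole_r : forall A, comp A Hole = A.
Proof. induction A; simpl; f_equal; auto. Qed.

Lemma plug_comp : forall A B t, plug (comp A B) t = plug A (plug B t).
Proof. induction A; intros; simpl; f_equal; auto. Qed.

Lemma depth_comp : forall A B, depth (comp A B) = depth A + depth B.
Proof. induction A; intros; simpl; auto. Qed.

Lemma isA_comp : forall A B, isA A -> isA B -> isA (comp A B).
Proof.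
  intros A B H; revert B; induction H; intros; simpl; auto.
  rewrite comp_assoc. simpl. constructor; auto.
Qed.

(* Partial answer contexts indexed by their height: the number of applications of [A^up],
   resp. of lambdas of [A^down], left unmatched. *)
Inductive isAup_n : nat -> ctx -> Prop :=
| isAup_n_hole : isAup_n 0 Hole
| isAup_n_app : forall c A U e, isA A -> isAup_n c U -> isAup_n (S c) (CAppL (comp A U) e).

Inductive isAdown_n : nat -> ctx -> Prop :=
| isAdown_n_hole : isAdown_n 0 Hole
| isAdown_n_lam : forall c A D, isA A -> isAdown_n c D -> isAdown_n (S c) (comp A (CLam D)).
(* [A0[A1[...Ae[ ] xe...] x1]]: answer contexts separated by [e] unmatched applications. *)
Inductive isA_apps : nat -> ctx -> Prop :=
| isA_apps_ans : forall A, isA A -> isA_apps 0 A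
| isA_apps_app : forall e S0 B x, isA_apps e S0 -> isA B -> isA_apps (S e) (comp S0 (CAppL B x)).

Definition down_ans (j : nat) (C : ctx) : Prop :=
  exists D A, C = comp D A /\ isAdown_n j D /\ isA A.

Lemma isAup_n_isAup : forall c U, isAup_n c U -> isAup U.
Proof. induction 1; constructor; auto. Qed.

Lemma isAup_isAup_n : forall U, isAup U -> exists c, isAup_n c U.
Proof.
  induction 1; [exists 0; constructor|].
  destruct IHisAup as [c Hc]. exists (S c); constructor; auto.
Qed.

Lemma isAdown_n_isAdown : forall c D, isAdown_n c D -> isAdown D.
Proof. induction 1; constructor; auto. Qed.

Lemma isAdown_isAdown_n : forall D, isAdown D -> exists c, isAdown_n c D.
Proof.
  induction 1; [exists 0; constructor|].
  destruct IHisAdown as [c Hc]. exists (S c); constructor; auto.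
Qed.

Fixpoint balance (C : ctx) : Z :=
  match C with
  | Hole => 0
  | CLam C => balance C - 1
  | CAppL C _ => balance C + 1
  | CAppR _ C => balance C
  end.

Lemma balance_comp : forall A B, balance (comp A B) = (balance A + balance B)%Z.
Proof. induction A; intros; simpl; try rewrite IHA; lia. Qed.

Lemma balance_isA : forall A, isA A -> balance A = 0%Z.
Proof. induction 1; simpl; auto. rewrite balance_comp; simpl; lia. Qed.

Lemma balance_isAup_n : forall c U, isAup_n c U -> balance U = Z.of_nat c.
Proof. induction 1; simpl; auto. rewrite balance_comp, balance_isA by auto. lia. Qed.

Lemma balance_isAdown_n : forall c D, isAdown_n c D -> balance D = (- Z.of_nat c)%Z.
Proof. induction 1; simpl; auto. rewrite balance_comp, balance_isA by auto. simpl. lia. Qed.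

Lemma isAdown_n_snoc : forall c D, isAdown_n (S c) D ->
  exists D' A', D = comp D' (comp A' (CLam Hole)) /\ isAdown_n c D' /\ isA A'.
Proof.
  intros c D H. remember (S c) as c1. revert c Heqc1.
  induction H as [|c0 A D HA HD IH]; intros c' Hc; [discriminate|].
  inversion Hc; subst. destruct c' as [|c'].
  - inversion HD; subst. exists Hole, A. simpl. repeat split; auto; constructor.
  - destruct (IH c' eq_refl) as [D' [A' [E1 [E2 E3]]]]. subst.
    exists (comp A (CLam D')), A'. split; [|split]; auto.
    rewrite comp_assoc. simpl. auto. constructor; auto.
Qed.

Lemma isAup_n_isAdown_n_isA : forall c U, isAup_n c U ->
  forall D M, isAdown_n c D -> isA M -> isA (comp U (comp M D)).
Proof.
  induction 1; intros.
  - inversion H; subst. simpl. rewrite comp_hole_r. auto.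
  - destruct (isAdown_n_snoc _ _ H1) as [D' [A' [E1 [E2 E3]]]]. subst.
    simpl. rewrite !comp_assoc.
    replace (comp A (comp U (comp M (comp D' (comp A' (CLam Hole))))))
      with (comp (comp (comp A (comp U (comp M D'))) A') (CLam Hole)).
    constructor; [|constructor]. apply isA_comp; auto. apply isA_comp; auto.
    rewrite !comp_assoc. auto.
Qed.

Lemma isA_Aup_Adown_height : forall U D, isAup U -> isAdown D -> isA (comp U D) ->
  exists c, isAup_n c U /\ isAdown_n c D.
Proof.
  intros. destruct (isAup_isAup_n _ H) as [c Hc]. destruct (isAdown_isAdown_n _ H0) as [c' Hc'].
  exists c; split; auto. apply balance_isA in H1.
  rewrite balance_comp, (balance_isAup_n _ _ Hc), (balance_isAdown_n _ _ Hc') in H1.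
  replace c with c' by lia. auto.
Qed.

(* The credit that [need_marked] passes to the hole of [C] from credit [k] at the root. *)
Fixpoint credit_after (k : nat) (C : ctx) : nat :=
  match C with
  | Hole => k
  | CLam C => credit_after (pred k) C
  | CAppL C _ => credit_after (S k) C
  | CAppR _ C => credit_after 0 C
  end.

Lemma credit_after_comp : forall A B k,
  credit_after k (comp A B) = credit_after (credit_after k A) B.
Proof. induction A; intros; simpl; auto. Qed.

Lemma credit_after_isA : forall A, isA A -> forall k, credit_after k A = k.
Proof.
  induction 1; intros; simpl; auto.
  rewrite credit_after_comp. simpl. rewrite IHisA1. simpl. auto.
Qed.

Lemma credit_after_isAup_n : forall c U, isAup_n c U -> forall k, credit_after k U = k + c.
Proof.
  induction 1; intros; simpl; [lia|].
  rewrite credit_after_comp, (credit_after_isA A H), IHisAup_n. lia.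
Qed.

Lemma isA_apps_cons : forall e S0, isA_apps e S0 ->
  forall A x, isA A -> isA_apps (S e) (CAppL (comp A S0) x).
Proof.
  induction 1; intros.
  - replace (CAppL (comp A0 A) x) with (comp Hole (CAppL (comp A0 A) x)) by reflexivity.
    constructor. constructor; constructor. apply isA_comp; auto.
  - rewrite <- comp_assoc. replace (CAppL (comp (comp A S0) (CAppL B x)) x0)
      with (comp (CAppL (comp A S0) x0) (CAppL B x)) by (simpl; rewrite comp_assoc; auto).
    constructor; auto.
Qed.

Lemma isA_apps_snoc_ans : forall e S0, isA_apps e S0 -> forall B, isA B -> isA_apps e (comp S0 B).
Proof.
  induction 1; intros.
  - constructor. apply isA_comp; auto.
  - rewrite comp_assoc. simpl. constructor; auto. apply isA_comp; auto.
Qed.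

Lemma isA_apps_snoc_app : forall e S0 x, isA_apps e S0 -> isA_apps (S e) (comp S0 (CAppL Hole x)).
Proof. intros. constructor; auto. constructor. Qed.

Lemma isA_apps_snoc_lam : forall e S0, isA_apps (S e) S0 -> isA_apps e (comp S0 (CLam Hole)).
Proof.
  intros. inversion H; subst. rewrite comp_assoc. simpl.
  change (CAppL (comp B (CLam Hole)) x) with (comp Hole (CAppL (comp B (CLam Hole)) x)).
  rewrite <- comp_assoc, comp_hole_r. apply isA_apps_snoc_ans; auto.
  constructor; auto. constructor.
Qed.

Lemma isAup_n_snoc : forall c U, isAup_n c U ->
  forall B x, isA B -> isAup_n (S c) (comp U (CAppL B x)).
Proof.
  induction 1; intros; simpl.
  - replace B with (comp B Hole) at 1 by apply comp_hole_r. constructor; auto. constructor.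
  - rewrite comp_assoc. constructor; auto.
Qed.

Lemma isA_apps_split : forall e Sg, isA_apps e Sg -> forall c, c <= e ->
  exists W0 U, Sg = comp W0 U /\ isA_apps (e - c) W0 /\ isAup_n c U.
Proof.
  induction 1; intros.
  - exists A, Hole. replace c with 0 by lia. rewrite comp_hole_r.
    repeat split; auto. constructor; auto. constructor.
  - destruct c.
    + exists (comp S0 (CAppL B x)), Hole. rewrite comp_hole_r. repeat split; auto.
      replace (S e - 0) with (S e) by lia. constructor; auto. constructor.
    + destruct (IHisA_apps c ltac:(lia)) as [W0 [U [E1 [E2 E3]]]]. subst.
      exists W0, (comp U (CAppL B x)). rewrite comp_assoc. repeat split; auto.
      apply isAup_n_snoc; auto.
Qed.

Lemma isA_apps_isE : forall e Sg, isA_apps e Sg -> forall X, isE X -> isE (comp Sg X).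
Proof.
  induction 1; intros.
  - apply isE_ans; auto.
  - rewrite comp_assoc. apply IHisA_apps. simpl. apply isE_appL. apply isE_ans; auto.
Qed.

Lemma down_ans_hole : down_ans 0 Hole.
Proof. exists Hole, Hole. repeat split; constructor. Qed.

Lemma down_ans_lam : forall j C, down_ans j C -> down_ans (S j) (CLam C).
Proof.
  intros j C [D [A [E1 [E2 E3]]]]. subst. exists (CLam D), A. repeat split; auto.
  replace (CLam D) with (comp Hole (CLam D)) by reflexivity. constructor; auto. constructor.
Qed.

Lemma down_ans_app : forall j C x, down_ans (S j) C -> down_ans j (CAppL C x).
Proof.
  intros j C x [D [A [E1 [E2 E3]]]]. subst. inversion E2 as [|c A0 D0 HA0 HD0]; subst.
  destruct j as [|j].
  - inversion HD0; subst. exists Hole, (CAppL (comp A0 (CLam A)) x). simpl. repeat split.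
    rewrite comp_assoc. simpl. auto. constructor. constructor; auto.
  - inversion HD0 as [|c A1 D1 HA1 HD1]; subst.
    exists (comp (CAppL (comp A0 (CLam A1)) x) (CLam D1)), A. split; [|split]; auto.
    simpl. rewrite !comp_assoc. simpl. rewrite !comp_assoc. simpl. auto.
    constructor; auto. constructor; auto.
Qed.

Lemma down_ans0_isA : forall C, down_ans 0 C -> isA C.
Proof. intros C [D [A [E1 [E2 E3]]]]. subst. inversion E2; subst. simpl. auto. Qed.

Lemma ctx_outer_decomp : forall C k c, c <= credit_after k C ->
  (exists C0 U, C = comp C0 U /\ isAup_n c U) \/
  (exists D S0 j e, C = comp D S0 /\ down_ans j D /\ isA_apps e S0 /\
                    e < c /\ c <= k - j + e /\ j <= k).
Proof.
  induction C; intros; simpl in *.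
  - destruct c.
    + left. exists Hole, Hole. split; auto. constructor.
    + right. exists Hole, Hole, 0, 0.
      repeat split; auto; first [apply down_ans_hole | constructor; constructor | lia].
  - destruct (IHC (pred k) c H) as [[C0 [U [E1 E2]]]|[D [S0 [j [e [E1 [E2 [E3 [E4 [E5 E6]]]]]]]]]].
    + left. exists (CLam C0), U. subst; auto.
    + right. exists (CLam D), S0, (S j), e. subst.
      repeat split; auto; first [apply down_ans_lam; auto | lia].
  - destruct (IHC (S k) c H) as [[C0 [U [E1 E2]]]|[D [S0 [j [e [E1 [E2 [E3 [E4 [E5 E6]]]]]]]]]].
    + left. exists (CAppL C0 t), U. subst; auto.
    + subst. destruct j.
      * apply down_ans0_isA in E2.
        assert (isA_apps (S e) (CAppL (comp D S0) t)) by (apply isA_apps_cons; auto).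
        destruct (le_lt_dec c (S e)).
        -- left. destruct (isA_apps_split _ _ H0 c l) as [W0 [U [F1 [F2 F3]]]]. exists W0, U; auto.
        -- right. exists Hole, (CAppL (comp D S0) t), 0, (S e).
           repeat split; auto; first [apply down_ans_hole | lia].
      * right. exists (CAppL D t), S0, j, e.
        repeat split; auto; first [apply down_ans_app; auto | lia].
  - destruct (IHC 0 c H) as [[C0 [U [E1 E2]]]|[D [S0 [j [e [E1 [E2 [E3 [E4 [E5 E6]]]]]]]]]].
    + left. exists (CAppR t C0), U. subst; auto.
    + lia.
Qed.

Lemma ctx_outer_suffix : forall C c, c <= credit_after 0 C ->
  exists C0 U, C = comp C0 U /\ isAup_n c U.
Proof.
  intros C c H.
  destruct (ctx_outer_decomp C 0 c H) as [Hsuffix|[D [S0 [j [e [_ [_ [_ [? [? ?]]]]]]]]]]; auto.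
  lia.
Qed.

(** * Walks over unmarked terms *)

Fixpoint mplug (C : ctx) (X : mterm) : mterm :=
  match C with
  | Hole => X
  | CLam C => MLam (mplug C X)
  | CAppL C e => MApp 0 (mplug C X) (embed e)
  | CAppR e C => MApp 0 (embed e) (mplug C X)
  end.

Lemma embed_plug : forall C t, embed (plug C t) = mplug C (embed t).
Proof. induction C; intros; simpl; f_equal; auto. Qed.

Lemma erase_mplug : forall C X, erase (mplug C X) = plug C (erase X).
Proof. induction C; intros; simpl; f_equal; auto; apply erase_embed. Qed.

Lemma mplug_comp : forall A B X, mplug (comp A B) X = mplug A (mplug B X).
Proof. induction A; intros; simpl; f_equal; auto. Qed.

Lemma walk_at_app : forall u c m l M e, wstate_ok u ->
  walk (wstate_at u (S c) m) M -> walk (wstate_at u c m) (MApp l M e).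
Proof.
  intros. destruct u; simpl in *.
  - apply walk_ans_app; auto.
  - replace (c + d) with (S (c + d - 1)) by lia. apply walk_fun_app.
    replace (S (S (c + d - 1))) with (S (c + d)) by lia. auto.
  - replace (c + d) with (S (c + d - 1)) by lia. apply walk_needfun_app.
    replace (S (S (c + d - 1))) with (S (c + d)) by lia. auto.
  - apply walk_down_app; auto.
  - apply walk_eval_app; auto.
Qed.

Lemma walk_at_lam : forall u c m M, wstate_ok u ->
  walk (wstate_at u c (S m)) M -> walk (wstate_at u (S c) m) (MLam M).
Proof.
  intros. destruct u; simpl in *.
  - apply walk_ans_lam; auto.
  - replace (S (c + d)) with (S (S (c + d - 1))) by lia. apply walk_fun_lam.
    replace (S (c + d - 1)) with (c + d) by lia. auto.
  - replace (S (c + d)) with (S (S (c + d - 1))) by lia. apply walk_needfun_lam.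
    replace (S (c + d - 1)) with (c + d) by lia. auto.
  - apply walk_down_lam; auto.
  - apply walk_eval_lam; auto.
Qed.

Lemma walk_mplug_isA : forall A, isA A -> forall u c tg X, wstate_ok u ->
  walk (wstate_at u c (depth A + tg)) X -> walk (wstate_at u c tg) (mplug A X).
Proof.
  induction 1; intros; simpl in *; auto.
  apply walk_at_app; auto. rewrite mplug_comp. apply IHisA1; auto. simpl.
  apply walk_at_lam; auto. apply IHisA2; auto. rewrite depth_comp in H2. simpl in H2.
  replace (depth A2 + S (depth A1 + tg)) with (depth A1 + S (depth A2) + tg) by lia. auto.
Qed.

Lemma walk_mplug_isAup_n : forall c' U, isAup_n c' U -> forall u c tg X, wstate_ok u ->
  walk (wstate_at u (c' + c) (depth U + tg)) X -> walk (wstate_at u c tg) (mplug U X).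
Proof.
  induction 1; intros; simpl in *; auto.
  apply walk_at_app; auto. rewrite mplug_comp. apply walk_mplug_isA; auto. apply IHisAup_n; auto.
  rewrite depth_comp in H2. replace (c + S c0) with (S c + c0) by lia.
  replace (depth U + (depth A + tg)) with (depth A + depth U + tg) by lia. auto.
Qed.

Lemma walk_mplug_isAdown_n : forall c D, isAdown_n c D -> forall k n X, c <= k ->
  walk (InDown (k - c) 0 (depth D + n)) X -> walk (InDown k 0 n) (mplug D X).
Proof.
  induction 1; intros; simpl in *.
  - replace (k - 0) with k in H0 by lia. auto.
  - rewrite mplug_comp. apply (walk_mplug_isA A H (InDown k 0 0) 0 n); simpl; auto.
    destruct k as [|k]. lia. apply walk_down_bind. apply IHisAdown_n. lia.
    rewrite depth_comp in H2. simpl in H2.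
    replace (depth D + S (depth A + n)) with (depth A + S (depth D) + n) by lia. auto.
Qed.

Lemma walk_embed_need_fun : forall c k A D t, isA A -> isAdown_n c D -> c <= k ->
  walk (InEval 0 (depth D)) (embed t) -> walk (NeedFun k 1) (embed (plug A (Lam (plug D t)))).
Proof.
  intros c k A D t HA HD Hc Ht.
  rewrite embed_plug. apply (walk_mplug_isA A HA (NeedFun k 1) 0 0); simpl; auto.
  apply walk_needfun_binder. rewrite embed_plug. apply walk_mplug_isAdown_n with c; auto.
  rewrite Nat.add_0_r. apply walk_down_eval; auto.
Qed.

Lemma walk_eval_ctx : forall E, isE E -> forall d n, walk (InEval d n) (mplug E (MVar (depth E + n))).
Proof.
  induction 1; intros; simpl.
  - constructor.
  - apply walk_eval_app. auto.
  - rewrite mplug_comp. apply (walk_mplug_isA A H (InEval d 0) 0 n); simpl; auto.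
    rewrite depth_comp. replace (depth A + depth E + n) with (depth E + (depth A + n)) by lia. auto.
  - rewrite mplug_comp. destruct (isA_Aup_Adown_height U D H H1 H4) as [c [Hc1 Hc2]].
    apply (walk_mplug_isAup_n c U Hc1 (InEval d 0) 0 n); simpl; auto.
    apply walk_eval_need.
    + apply walk_embed_need_fun with c; auto; [lia|].
      rewrite embed_plug, Nat.add_comm. apply IHisE1.
    + rewrite depth_comp. simpl.
      replace (depth U + depth E2 + n) with (depth E2 + (depth U + n)) by lia. apply IHisE2.
Qed.

Definition down_to_var (k d n : nat) (t : term) : Prop :=
  exists C E c, t = plug C (plug E (Var (depth C + depth E + n))) /\
                down_ans (d + c) C /\ c <= k /\ isE E.

(* What a walk over [embed t] says about [t] itself. *)
Definition walk_shape (s : wstate) (t : term) : Prop :=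
  match s with
  | Ans d => exists C b, t = plug C (Lam b) /\ down_ans d C
  | Fun _ => True
  | NeedFun k d =>
      exists C body, t = plug C (Lam body) /\ down_ans (d - 1) C /\ down_to_var k 0 0 body
  | InDown k d n => down_to_var k d n t
  | InEval d n =>
      exists E, t = plug E (Var (depth E + n)) /\ forall W0, isA_apps d W0 -> isE (comp W0 E)
  end.

Ltac invert_embed := match goal with
  | H : MVar _ = embed ?t |- _ =>
      destruct t; simpl in H; try discriminate; inversion H; subst; clear H
  | H : MLam _ = embed ?t |- _ =>
      destruct t; simpl in H; try discriminate; inversion H; subst; clear H
  | H : MApp _ _ _ = embed ?t |- _ =>
      destruct t; simpl in H; try discriminate; inversion H; subst; clear H
  | _ => idtac
  end.

Lemma plug_down_ans_var : forall D A E,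
  plug (comp D A) (plug E (Var (depth (comp D A) + depth E + 0))) =
  plug D (plug (comp A E) (Var (depth D + depth (comp A E)))).
Proof.
  intros. rewrite !plug_comp, !depth_comp. do 4 f_equal. lia.
Qed.

Lemma isE_need_app : forall d f E W0, walk_shape (NeedFun d 1) f -> isE E -> isA_apps d W0 ->
  isE (comp W0 (CAppR f E)).
Proof.
  intros d f E W0 [A1 [body [-> [HA1 HB]]]] HE HW0.
  destruct HB as [C [E1 [c [-> [[D [A [-> [HD HA]]]] [Hc HE1]]]]]].
  destruct (isA_apps_split _ _ HW0 c Hc) as [W1 [U [-> [HW1 HU]]]].
  rewrite comp_assoc. apply isA_apps_isE with (d - c); auto.
  rewrite plug_down_ans_var. apply isE_need; auto.
  - apply isAup_n_isAup with c; auto.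
  - apply down_ans0_isA. auto.
  - apply isAdown_n_isAdown with c; auto.
  - apply isE_ans; auto.
  - apply (isAup_n_isAdown_n_isA c U HU D Hole HD isA_hole).
Qed.

Lemma walk_embed_shape : forall s M, walk s M -> forall t, M = embed t -> walk_shape s t.
Proof.
  induction 1; intros t Ht; invert_embed; simpl; try exact I.
  - exists Hole, t. split; auto. apply down_ans_hole.
  - destruct (IHwalk t1 eq_refl) as [C [b [E1 E2]]]. exists (CAppL C t2), b. subst.
    split; auto. apply down_ans_app; auto.
  - destruct (IHwalk t eq_refl) as [C [b [E1 E2]]]. exists (CLam C), b. subst.
    split; auto. apply down_ans_lam; auto.
  - destruct (IHwalk t1 eq_refl) as [C [b [E1 [E2 E3]]]]. exists (CAppL C t2), b. subst.
    split; auto. split; auto. apply down_ans_app. replace (S (d - 0)) with (S d) by lia. auto.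
  - destruct (IHwalk t eq_refl) as [C [b [E1 [E2 E3]]]]. exists (CLam C), b. subst.
    split; auto. split; auto.
    replace (S (S d) - 1) with (S (S d - 1)) by lia. apply down_ans_lam; auto.
    replace d with (S d - 1) by lia. auto.
  - exists Hole, t. split; auto. split; auto. apply down_ans_hole. apply (IHwalk t eq_refl).
  - destruct (IHwalk t1 eq_refl) as [C [E [c [E1 [E2 [E3 E4]]]]]].
    exists (CAppL C t2), E, c. subst. repeat split; auto. apply down_ans_app. auto.
  - destruct (IHwalk t eq_refl) as [C [E [c [E1 [E2 [E3 E4]]]]]].
    exists (CLam C), E, c. subst. repeat split; auto.
    + replace (depth C + depth E + S n) with (depth (CLam C) + depth E + n) by (simpl; lia).
      reflexivity.
    + apply down_ans_lam. auto.
  - destruct (IHwalk t eq_refl) as [C [E [c [E1 [E2 [E3 E4]]]]]].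
    exists (CLam C), E, (S c). subst. repeat split; auto.
    + replace (depth C + depth E + S n) with (depth (CLam C) + depth E + n) by (simpl; lia).
      reflexivity.
    + apply down_ans_lam. auto.
    + lia.
  - destruct (IHwalk _ Ht) as [E [E1 E2]]. exists Hole, E, 0. subst. repeat split; auto.
    apply down_ans_hole. lia. specialize (E2 Hole (isA_apps_ans _ isA_hole)). auto.
  - exists Hole. split; auto. intros. rewrite comp_hole_r.
    pose proof (isA_apps_isE _ _ H Hole isE_hole). rewrite comp_hole_r in H0. auto.
  - destruct (IHwalk t1 eq_refl) as [E [E1 E2]]. exists (CAppL E t2). subst. split; auto.
    intros. replace (comp W0 (CAppL E t2)) with (comp (comp W0 (CAppL Hole t2)) E).
    apply E2. apply isA_apps_snoc_app; auto. rewrite comp_assoc. auto.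
  - destruct (IHwalk t eq_refl) as [E [E1 E2]]. exists (CLam E). subst. split.
    replace (depth E + S n) with (depth (CLam E) + n) by (simpl; lia); reflexivity.
    intros. replace (comp W0 (CLam E)) with (comp (comp W0 (CLam Hole)) E).
    apply E2. apply isA_apps_snoc_lam; auto. rewrite comp_assoc. auto.
  - destruct (IHwalk2 t2 eq_refl) as [E [-> HE]].
    exists (CAppR t1 E). split; [reflexivity|].
    intros W0 HW0. apply isE_need_app with d; auto.
    apply (HE Hole). apply isA_apps_ans, isA_hole.
Qed.

(* The spine paths along which [contract_fun j] and [contract_arg c] reach the hole. *)
Fixpoint fun_spine (C : ctx) (j : nat) : Prop :=
  match C with
  | Hole => j = 1
  | CLam C => 2 <= j /\ fun_spine C (j - 1)
  | CAppL C _ => fun_spine C (S j)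
  | CAppR _ _ => False
  end.

Fixpoint arg_spine (C : ctx) (c : nat) : Prop :=
  match C with
  | Hole => c = 0
  | CLam C => 1 <= c /\ arg_spine C (c - 1)
  | CAppL C _ => arg_spine C (S c)
  | CAppR _ _ => False
  end.

Lemma fun_spine_isA : forall A, isA A ->
  forall C j, 1 <= j -> fun_spine C j -> fun_spine (comp A C) j.
Proof.
  induction 1; intros; simpl; auto.
  rewrite comp_assoc. simpl. apply IHisA1. lia. simpl. split. lia.
  replace (j - 0) with j by lia. apply IHisA2; auto.
Qed.

Lemma arg_spine_isA : forall A, isA A -> forall C c, arg_spine C c -> arg_spine (comp A C) c.
Proof.
  induction 1; intros; simpl; auto.
  rewrite comp_assoc. simpl. apply IHisA1. simpl. split. lia.
  replace (c - 0) with c by lia. apply IHisA2; auto.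
Qed.

Lemma contract_fun_mplug : forall C j B G, fun_spine C j ->
  contract_fun j (mplug C (MLam B)) G =
  mplug C (contract_arg 0 0 (mren (fun i => i + depth C) G) B).
Proof.
  induction C; intros; simpl in *; try contradiction.
  - subst. simpl. f_equal. rewrite <- (mren_id G) at 1. apply mren_ext. intros; lia.
  - destruct H as [H1 H2]. destruct j as [|[|j]]; try lia. f_equal. rewrite IHC; auto.
    f_equal. f_equal. rewrite mren_comp. apply mren_ext. intros; lia.
  - f_equal. apply IHC; auto.
Qed.

Lemma contract_arg_mplug : forall C c k b B, arg_spine C c ->
  contract_arg c k (mplug C (MLam b)) B = mplug C (msubst (need_msub (MLam b) (k + depth C)) B).
Proof.
  induction C; intros; simpl in *; try contradiction.
  - subst. rewrite Nat.add_0_r. auto.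
  - destruct H as [H1 H2]. destruct c as [|c]; try lia. f_equal. rewrite IHC.
    + replace (S k + depth C) with (k + S (depth C)) by lia. auto.
    + replace c with (S c - 1) by lia; auto.
  - f_equal. apply IHC; auto.
Qed.

Lemma shift_plug : forall C d c t,
  shift d c (plug C t) = plug (shiftc d c C) (shift d (c + depth C) t).
Proof.
  induction C; intros; simpl.
  - rewrite Nat.add_0_r. auto.
  - rewrite IHC. replace (S c + depth C) with (c + S (depth C)) by lia. auto.
  - rewrite IHC. auto.
  - rewrite IHC. auto.
Qed.

Lemma depth_shiftc : forall C d c, depth (shiftc d c C) = depth C.
Proof. induction C; intros; simpl; auto. Qed.

Lemma shiftc_comp : forall A B d c,
  shiftc d c (comp A B) = comp (shiftc d c A) (shiftc d (c + depth A) B).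
Proof.
  induction A; intros; simpl; try rewrite IHA; auto.
  rewrite Nat.add_0_r; auto. replace (S c + depth A) with (c + S (depth A)) by lia. auto.
Qed.

Lemma isA_shiftc : forall A, isA A -> forall d c, isA (shiftc d c A).
Proof.
  induction 1; intros; simpl. constructor.
  rewrite shiftc_comp. simpl. constructor; auto.
Qed.

Lemma erase_contract_embed : forall A1 A2 body b, isA A1 -> isA A2 ->
  erase (contract_fun 1 (embed (plug A1 (Lam body))) (embed (plug A2 (Lam b)))) =
  plug A1 (plug (shiftc (depth A1) 0 A2) (subst (need_sub (depth A1) (depth A2) (Lam b)) body)).
Proof.
  intros. rewrite embed_plug. simpl. rewrite contract_fun_mplug.
  2: { pose proof (fun_spine_isA A1 H Hole 1 (le_n 1) eq_refl) as HA1.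
       rewrite comp_hole_r in HA1. exact HA1. }
  replace (mren (fun i => i + depth A1) (embed (plug A2 (Lam b)))) with
    (embed (plug (shiftc (depth A1) 0 A2) (shift (depth A1) (depth A2) (Lam b)))).
  2: { rewrite <- shift_plug, embed_shift. apply mren_ext. intros. unfold shift_var. simpl. auto. }
  rewrite embed_plug. simpl. rewrite contract_arg_mplug.
  2: { pose proof (arg_spine_isA _ (isA_shiftc A2 H0 (depth A1) 0) Hole 0 eq_refl) as HA2.
       rewrite comp_hole_r in HA2. exact HA2. }
  rewrite erase_mplug, erase_mplug. f_equal. f_equal.
  transitivity (erase (embed (subst (need_sub (depth A1) (depth A2) (Lam b)) body))).
  - f_equal. rewrite embed_subst. apply msubst_ext. intros [|i]; simpl; auto.
    rewrite depth_shiftc. auto.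
  - apply erase_embed.
Qed.

(** * Relabelling *)

Fixpoint relabel (f : nat -> nat) (M : mterm) : mterm :=
  match M with
  | MVar i => MVar i
  | MLam M => MLam (relabel f M)
  | MApp l M N => MApp (f l) (relabel f M) (relabel f N)
  end.

Fixpoint labels_in (L : nat -> bool) (M : mterm) : Prop :=
  match M with
  | MVar _ => True
  | MLam M => labels_in L M
  | MApp l M N => L l = true /\ labels_in L M /\ labels_in L N
  end.

Lemma unmark_relabel : forall f M, unmark (relabel f M) = unmark M.
Proof. induction M; simpl; f_equal; auto. Qed.

Lemma erase_relabel : forall f M, erase (relabel f M) = erase M.
Proof. intros. rewrite <- erase_unmark, unmark_relabel, erase_unmark. auto. Qed.

Lemma relabel_mren : forall f M xi, relabel f (mren xi M) = mren xi (relabel f M).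
Proof. induction M; intros; simpl; f_equal; auto. Qed.

Lemma relabel_msubst : forall f M s,
  relabel f (msubst s M) = msubst (fun i => relabel f (s i)) (relabel f M).
Proof.
  induction M; intros; simpl; f_equal; auto.
  rewrite IHM. apply msubst_ext. intros [|i]; simpl; auto. apply relabel_mren.
Qed.

Lemma relabel_contract_arg : forall f, f 0 = 0 -> forall G c k B,
  relabel f (contract_arg c k G B) = contract_arg c k (relabel f G) (relabel f B).
Proof.
  intros f Hf. induction G; intros; simpl; try rewrite Hf; auto.
  - destruct c; simpl; f_equal; auto.
    rewrite relabel_msubst. apply msubst_ext. intros [|i]; simpl; auto.
  - f_equal; auto.
Qed.

Lemma relabel_contract_fun : forall f, f 0 = 0 -> forall F j G,
  relabel f (contract_fun j F G) = contract_fun j (relabel f F) (relabel f G).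
Proof.
  intros f Hf. induction F; intros; simpl; try rewrite Hf; auto.
  - destruct j as [|[|j]]; simpl; try rewrite Hf; auto.
    + apply relabel_contract_arg; auto.
    + f_equal. rewrite IHF, relabel_mren. auto.
  - f_equal; auto.
Qed.

Lemma develop_relabel : forall f P Q, f 0 = 0 -> (forall l, P (f l) = Q l) ->
  forall M, develop P (relabel f M) = relabel f (develop Q M).
Proof.
  intros f P Q Hf HPQ. induction M; simpl; f_equal; auto.
  rewrite HPQ. destruct (Q n); simpl; rewrite ?IHM1, ?IHM2; auto.
  rewrite relabel_contract_fun; auto.
Qed.

Lemma need_marked_relabel : forall f, f 0 = 0 -> (forall l, f l <> 0 -> l <> 0) ->
  forall M k, need_marked k M -> need_marked k (relabel f M).
Proof.
  intros f Hf Hnz. induction M; intros; simpl in *; auto.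
  destruct H as [H1 [H2 H3]]. split; [|split]; auto.
  intros Hl. destruct (H3 (Hnz _ Hl)).
  split; eapply walk_unmark_eq; eauto; apply unmark_relabel.
Qed.

Lemma relabel_labels_in_id : forall f L M, (forall l, L l = true -> f l = l) ->
  labels_in L M -> relabel f M = M.
Proof. induction M; intros; simpl in *; intuition; f_equal; auto. Qed.

Lemma labels_in_weaken : forall L L', (forall l, L l = true -> L' l = true) ->
  forall M, labels_in L M -> labels_in L' M.
Proof. intros L L' H. induction M; simpl; intuition. Qed.

Lemma labels_in_mren : forall L M xi, labels_in L M -> labels_in L (mren xi M).
Proof. induction M; intros; simpl in *; intuition. Qed.

Lemma labels_in_msubst : forall L M s, labels_in L M -> (forall i, labels_in L (s i)) ->
  labels_in L (msubst s M).
Proof.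
  induction M; intros; simpl in *; intuition.
  apply IHM; auto. intros [|i]; simpl; auto. apply labels_in_mren; auto.
Qed.

Lemma labels_in_contract_arg : forall L, L 0 = true -> forall G c k B,
  labels_in L G -> labels_in L B -> labels_in L (contract_arg c k G B).
Proof.
  intros L HL. induction G; intros; simpl in *; intuition.
  destruct c; simpl; auto. apply labels_in_msubst; auto. intros [|i]; simpl; auto.
Qed.

Lemma labels_in_contract_fun : forall L, L 0 = true -> forall F j G,
  labels_in L F -> labels_in L G -> labels_in L (contract_fun j F G).
Proof.
  intros L HL. induction F; intros; simpl in *; intuition.
  destruct j as [|[|j]]; simpl; intuition.
  - apply labels_in_contract_arg; auto.
  - apply IHF; auto. apply labels_in_mren; auto.
Qed.

Lemma labels_in_develop : forall L L' P, L 0 = true ->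
  (forall l, L' l = true -> P l = false -> L l = true) ->
  forall M, labels_in L' M -> labels_in L (develop P M).
Proof.
  intros L L' P HL HLL. induction M; intros; simpl in *; intuition.
  destruct (P n) eqn:E; simpl; auto. apply labels_in_contract_fun; auto.
Qed.

Lemma develop_ext : forall L P Q, (forall l, L l = true -> P l = Q l) ->
  forall M, labels_in L M -> develop P M = develop Q M.
Proof.
  intros L P Q HPQ. induction M; intros Hl; simpl in *.
  - auto.
  - f_equal; auto.
  - destruct Hl as [H1 [H2 H3]]. rewrite HPQ by auto. rewrite IHM1, IHM2 by auto. auto.
Qed.

Lemma develop_unmarked : forall P, P 0 = false -> forall M, unmark M = M -> develop P M = M.
Proof.
  intros P HP. induction M; intros; simpl in *; auto.
  - inversion H. rewrite H1. f_equal; auto.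
  - inversion H. subst. rewrite HP. rewrite H2, H3. rewrite IHM1, IHM2; auto.
Qed.

(** * Erasing marked reductions *)

Lemma step_plug : forall C s s', step s s' -> step (plug C s) (plug C s').
Proof.
  induction C; intros; simpl; [auto | apply step_lam | apply step_appL | apply step_appR]; auto.
Qed.

Lemma step_need_redex_in_ctx : forall k C f a, k <= credit_after 0 C ->
  walk_shape (NeedFun k 1) f -> walk_shape (Ans 0) a ->
  step (plug C (App f a)) (plug C (erase (contract_fun 1 (embed f) (embed a)))).
Proof.
  intros k C f a HC [A1 [body [-> [HA1 HB]]]] [A2 [b [-> HA2]]].
  destruct HB as [D' [E [c [-> [[D [A [-> [HD HA]]]] [Hc HE]]]]]].
  apply down_ans0_isA in HA1. apply down_ans0_isA in HA2.
  destruct (ctx_outer_suffix C c ltac:(lia)) as [C0 [U [-> HU]]].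
  rewrite erase_contract_embed, plug_down_ans_var, !(plug_comp C0 U) by auto.
  apply step_plug, step_root, beta_need_rule; auto.
  - apply isAup_n_isAup with c; auto.
  - apply isAdown_n_isAdown with c; auto.
  - apply isE_ans; auto.
  - apply (isAup_n_isAdown_n_isA c U HU D Hole HD isA_hole).
Qed.

Lemma mstep_step_in_ctx : forall P, P 0 = false ->
  forall X Y, mstep P X Y -> forall k, need_marked k X ->
  forall C, k <= credit_after 0 C -> step (plug C (erase X)) (plug C (erase Y)).
Proof.
  intros P HP0. induction 1; intros k Hg C HC; simpl in *.
  - destruct Hg as [_ [_ Hredex]].
    destruct Hredex as [HF HG]; [intros ->; congruence|].
    replace (erase (contract_fun 1 F G))
      with (erase (contract_fun 1 (embed (erase F)) (embed (erase G)))).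
    2: { rewrite !embed_erase, <- unmark_contract_fun, erase_unmark. auto. }
    apply step_need_redex_in_ctx with k; auto.
    + apply (walk_embed_shape _ (embed (erase F))); auto.
      apply (walk_unmark_eq _ _ HF). rewrite embed_erase, unmark_idem. auto.
    + apply (walk_embed_shape _ (embed (erase G))); auto.
      apply (walk_unmark_eq _ _ HG). rewrite embed_erase, unmark_idem. auto.
  - change (step (plug C (plug (CLam Hole) (erase M))) (plug C (plug (CLam Hole) (erase M')))).
    rewrite <- !plug_comp. apply IHmstep with (pred k); auto.
    rewrite credit_after_comp. simpl. lia.
  - change (step (plug C (plug (CAppL Hole (erase N)) (erase M)))
                 (plug C (plug (CAppL Hole (erase N)) (erase M')))).
    rewrite <- !plug_comp. apply IHmstep with (S k); [apply Hg|].
    rewrite credit_after_comp. simpl. lia.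
  - change (step (plug C (plug (CAppR (erase M) Hole) (erase N)))
                 (plug C (plug (CAppR (erase M) Hole) (erase N')))).
    rewrite <- !plug_comp. apply IHmstep with 0; [apply Hg|].
    rewrite credit_after_comp. simpl. lia.
Qed.

Lemma msteps_steps : forall P, P 0 = false ->
  forall X Y, msteps P X Y -> need_marked 0 X -> steps (erase X) (erase Y).
Proof.
  intros P HP. induction 1; intros.
  - apply rt_step. apply (mstep_step_in_ctx P HP x y H 0 H0 Hole). simpl; lia.
  - apply rt_refl.
  - eapply rt_trans.
    + apply IHclos_refl_trans1; auto.
    + apply IHclos_refl_trans2. eapply need_marked_msteps; eauto.
Qed.

(** * Marking a single step *)

Inductive mark_step : mterm -> mterm -> Prop :=
| mark_step_root : forall F G, unmark F = F -> unmark G = G -> walk (Fun 1) F -> walk (Ans 0) G ->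
    mark_step (MApp 2 F G) (contract_fun 1 F G)
| mark_step_lam : forall X X', mark_step X X' -> mark_step (MLam X) (MLam X')
| mark_step_appL : forall X X' N, unmark N = N -> mark_step X X' ->
    mark_step (MApp 0 X N) (MApp 0 X' N)
| mark_step_appR : forall X X' N, unmark N = N -> mark_step X X' ->
    mark_step (MApp 0 N X) (MApp 0 N X').

Definition step_marking (t t1 : term) : Prop :=
  exists X X', unmark X = embed t /\ mark_step X X' /\ need_marked 0 X /\ erase X' = t1.

Lemma mark_step_mplug : forall C Y Y', mark_step Y Y' -> mark_step (mplug C Y) (mplug C Y').
Proof. induction C; intros; simpl; auto; constructor; auto; apply unmark_embed. Qed.

Lemma unmark_mplug : forall C Y, unmark (mplug C Y) = mplug C (unmark Y).
Proof. induction C; intros; simpl; f_equal; auto; apply unmark_embed. Qed.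

Lemma need_marked_mplug : forall C k Y, need_marked (credit_after k C) Y -> need_marked k (mplug C Y).
Proof.
  induction C; intros; simpl in *; auto.
  - repeat split; auto. apply need_marked_embed. intros; lia. intros; lia.
  - repeat split; auto. apply need_marked_embed. intros; lia. intros; lia.
Qed.

Lemma beta_need_step_marking : forall t t1, beta_need t t1 -> step_marking t t1.
Proof.
  intros t t1 H. inversion H as [U A1 D E A2 b HU HA1 HD HE HA2 HUD]; subst.
  destruct (isA_Aup_Adown_height U D HU HD HUD) as [c [Hc1 Hc2]].
  set (f := plug A1 (Lam (plug D (plug E (Var (depth D + depth E)))))).
  set (a := plug A2 (Lam b)).
  assert (Hf : walk (NeedFun (credit_after 0 U) 1) (embed f)).
  { rewrite (credit_after_isAup_n c U Hc1). apply walk_embed_need_fun with c; auto.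
    rewrite embed_plug, Nat.add_comm. apply walk_eval_ctx; auto. }
  assert (Ha : walk (Ans 0) (embed a)).
  { unfold a. rewrite embed_plug. apply (walk_mplug_isA A2 HA2 (Ans 0) 0 0); simpl; auto.
    apply walk_ans_val. }
  exists (mplug U (MApp 2 (embed f) (embed a))), (mplug U (contract_fun 1 (embed f) (embed a))).
  split; [|split; [|split]].
  - rewrite unmark_mplug, embed_plug. simpl. rewrite !unmark_embed. auto.
  - apply mark_step_mplug, mark_step_root; try apply unmark_embed; auto.
    apply (walk_needfun_fun _ _ Hf).
  - apply need_marked_mplug. simpl. split; [|split]; auto using need_marked_embed.
  - rewrite erase_mplug. f_equal. apply erase_contract_embed; auto.
Qed.

Lemma step_mark_step : forall t t1, step t t1 -> step_marking t t1.
Proof.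
  induction 1 as [t t1 H|t t1 _ [X [X' [E1 [E2 [E3 E4]]]]]|t t1 e _ [X [X' [E1 [E2 [E3 E4]]]]]
                 |t t1 e _ [X [X' [E1 [E2 [E3 E4]]]]]].
  - apply beta_need_step_marking; auto.
  - exists (MLam X), (MLam X'). simpl. split; [|split; [|split]].
    + congruence.
    + apply mark_step_lam; auto.
    + auto.
    + congruence.
  - exists (MApp 0 X (embed e)), (MApp 0 X' (embed e)). simpl. split; [|split; [|split]].
    + rewrite unmark_embed. congruence.
    + constructor; auto. apply unmark_embed.
    + split; [|split]; [apply need_marked_mono with 0; auto | apply need_marked_embed | lia].
    + rewrite erase_embed. congruence.
  - exists (MApp 0 (embed e) X), (MApp 0 (embed e) X'). simpl. split; [|split; [|split]].
    + rewrite unmark_embed. congruence.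
    + constructor; auto. apply unmark_embed.
    + split; [|split]; [apply need_marked_embed | auto | lia].
    + rewrite erase_embed. congruence.
Qed.

(** * The strip lemma *)

(* Label 1 marks the redexes of a parallel step, label 2 the redex of a single step. *)
Definition lab01 (l : nat) := l <=? 1.

Definition lab02 (l : nat) := (l =? 0) || (l =? 2).

Definition lab012 (l : nat) := l <=? 2.

Definition is_lab1 (l : nat) := l =? 1.

Definition is_lab2 (l : nat) := l =? 2.

Definition is_lab12 (l : nat) := (l =? 1) || (l =? 2).

Definition forget2 (l : nat) := if l =? 2 then 0 else l.

Definition two_to_one (l : nat) := if l =? 2 then 1 else if l =? 1 then 0 else l.

Lemma lab01_lab012 : forall l, lab01 l = true -> lab012 l = true.
Proof. unfold lab01, lab012. intros. apply Nat.leb_le in H. apply Nat.leb_le. lia. Qed.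

Lemma forget2_lab01 : forall l, lab01 l = true -> forget2 l = l.
Proof. intros [|[|l]]; unfold lab01, forget2; simpl; auto; discriminate. Qed.

Lemma relabel_forget2_id : forall M, labels_in lab01 M -> relabel forget2 M = M.
Proof. intros. apply relabel_labels_in_id with lab01; auto. apply forget2_lab01. Qed.

Definition par (t u : term) : Prop :=
  exists M, labels_in lab01 M /\ need_marked 0 M /\ erase M = t /\ erase (develop is_lab1 M) = u.

Lemma par_steps : forall t u, par t u -> steps t u.
Proof.
  intros t u [M [H1 [H2 [<- <-]]]].
  apply (msteps_steps is_lab1 eq_refl); auto.
  apply msteps_develop; eauto using need_marked_well_marked.
Qed.

Lemma develop_mark_step : forall X X', mark_step X X' -> develop is_lab2 X = X'.
Proof.
  induction 1; simpl.
  - rewrite !develop_unmarked; auto.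
  - f_equal; auto.
  - rewrite IHmark_step, develop_unmarked; auto.
  - rewrite IHmark_step, develop_unmarked; auto.
Qed.

Lemma mark_step_labels : forall X X', mark_step X X' -> labels_in lab02 X.
Proof.
  assert (Hunmarked : forall M, unmark M = M -> labels_in lab02 M).
  { induction M; simpl; intros Hu.
    - auto.
    - apply IHM. injection Hu; auto.
    - injection Hu as Hn Ha Hb. subst n.
      split; [reflexivity|]. split; [apply IHM1 | apply IHM2]; auto. }
  induction 1; simpl; repeat split; auto.
Qed.

Lemma step_par : forall t u, step t u -> par t u.
Proof.
  intros t u H. destruct (step_mark_step t u H) as [X [X' [E1 [E2 [E3 <-]]]]].
  exists (relabel two_to_one X). split; [|split; [|split]].
  - pose proof (mark_step_labels _ _ E2) as HL. clear -HL.
    induction X; simpl in *; auto. destruct HL as [H1 [H2 H3]]. repeat split; auto.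
    unfold lab02, lab01, two_to_one in *. destruct n as [|[|[|n]]]; simpl in *; auto.
  - apply need_marked_relabel; auto. intros [|[|[|l]]]; simpl; auto.
  - rewrite erase_relabel, <- erase_unmark, E1, erase_embed. auto.
  - rewrite (develop_relabel two_to_one is_lab1 is_lab2), erase_relabel, (develop_mark_step _ _ E2);
      auto.
    intros [|[|[|l]]]; reflexivity.
Qed.

(* [Mh] adds to the marking [M] the redex of the single step [X -> X'] (label 2, unless [M]
   already marks it with 1); [Y'] is what remains of [Mh]'s marks after contracting it. *)
Definition merged_marking (M X X' : mterm) : Prop :=
  exists Mh Y', relabel forget2 Mh = M /\ labels_in lab012 Mh /\
    (forall k, need_marked k M -> need_marked k X -> need_marked k Mh) /\
    mstep is_lab12 Mh Y' /\ unmark Y' = unmark X' /\ labels_in lab01 Y'.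

Lemma merged_marking_root : forall n M1 M2 F G, unmark M1 = unmark F -> unmark M2 = unmark G ->
  walk (Fun 1) F -> walk (Ans 0) G -> labels_in lab01 (MApp n M1 M2) ->
  merged_marking (MApp n M1 M2) (MApp 2 F G) (contract_fun 1 F G).
Proof.
  intros n M1 M2 F G H1 H2 HF HG [HL1 [HL2 HL3]].
  exists (MApp (if n =? 1 then 1 else 2) M1 M2), (contract_fun 1 M1 M2).
  split; [|split; [|split; [|split; [|split]]]].
  - simpl. rewrite !relabel_forget2_id by auto. f_equal.
    unfold lab01, forget2 in *. destruct n as [|[|n]]; simpl in *; auto; discriminate.
  - simpl. split; [destruct (n =? 1); auto|].
    split; apply (labels_in_weaken lab01); auto using lab01_lab012.
  - intros k [G1 [G2 _]] [_ [_ K3]]. simpl. split; [|split]; auto.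
    intros _. destruct (K3 ltac:(lia)) as [K4 K5].
    split; [apply (walk_unmark_eq _ _ K4) | apply (walk_unmark_eq _ _ K5)]; congruence.
  - apply mstep_root; [unfold is_lab12; destruct (n =? 1); auto | |].
    + apply (walk_unmark_eq _ _ HF); congruence.
    + apply (walk_unmark_eq _ _ HG); congruence.
  - rewrite !unmark_contract_fun. congruence.
  - apply labels_in_contract_fun; auto.
Qed.

Lemma mark_step_transport : forall X X', mark_step X X' -> forall M, unmark M = unmark X ->
  labels_in lab01 M -> merged_marking M X X'.
Proof.
  induction 1; intros M HM HL; destruct M; simpl in HM; try discriminate; injection HM; intros.
  - apply merged_marking_root; congruence.
  - simpl in HL.
    destruct (IHmark_step M ltac:(congruence) HL) as [Mh [Y' [E2 [E3 [E4 [E5 [E6 E7]]]]]]].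
    exists (MLam Mh), (MLam Y'). simpl.
    split; [|split; [|split; [|split; [|split]]]]; try congruence; auto.
    apply mstep_lam; auto.
  - destruct HL as [HL1 [HL2 HL3]].
    destruct (IHmark_step M1 ltac:(congruence) HL2) as [Mh [Y' [E2 [E3 [E4 [E5 [E6 E7]]]]]]].
    exists (MApp n Mh M2), (MApp n Y' M2). simpl.
    split; [|split; [|split; [|split; [|split]]]].
    + rewrite E2, forget2_lab01, relabel_forget2_id by auto. reflexivity.
    + repeat split; auto using lab01_lab012.
      exact (labels_in_weaken _ _ lab01_lab012 M2 HL3).
    + intros k [G1 [G2 G3]] [K1 _]. split; [|split]; auto.
      intros Hn. destruct (G3 Hn) as [HF HG]. split; auto.
      apply (walk_unmark_eq _ _ HF). rewrite <- E2, unmark_relabel. auto.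
    + apply mstep_appL; auto.
    + congruence.
    + repeat split; auto.
  - destruct HL as [HL1 [HL2 HL3]].
    destruct (IHmark_step M2 ltac:(congruence) HL3) as [Mh [Y' [E2 [E3 [E4 [E5 [E6 E7]]]]]]].
    exists (MApp n M1 Mh), (MApp n M1 Y'). simpl.
    split; [|split; [|split; [|split; [|split]]]].
    + rewrite E2, forget2_lab01, relabel_forget2_id by auto. reflexivity.
    + repeat split; auto using lab01_lab012.
      exact (labels_in_weaken _ _ lab01_lab012 M1 HL2).
    + intros k [G1 [G2 G3]] [_ [K2 _]]. split; [|split]; auto.
      intros Hn. destruct (G3 Hn) as [HF HG]. split; auto.
      apply (walk_unmark_eq _ _ HG). rewrite <- E2, unmark_relabel. auto.
    + apply mstep_appR; auto.
    + congruence.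
    + repeat split; auto.
Qed.

Lemma develop_lab12_mstep : forall Mh Y', mstep is_lab12 Mh Y' -> well_marked Mh ->
  labels_in lab01 Y' -> develop is_lab1 Y' = develop is_lab12 Mh.
Proof.
  intros Mh Y' HM Hwm HY.
  rewrite (develop_ext lab01 is_lab1 is_lab12), (develop_mstep is_lab12 eq_refl Mh Y'); auto.
  intros [|[|l]]; unfold lab01, is_lab1, is_lab12; simpl; auto; discriminate.
Qed.

(* Developing the 1-redexes first leaves the residuals of the 2-redexes, all labelled 2. *)
Lemma develop_lab1_steps_lab12 : forall Mh, labels_in lab012 Mh -> need_marked 0 Mh ->
  steps (erase (develop is_lab1 Mh)) (erase (develop is_lab12 Mh)).
Proof.
  intros Mh HL HG.
  assert (HMQ : msteps is_lab1 Mh (develop is_lab1 Mh)).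
  { apply msteps_develop; eauto using need_marked_well_marked. }
  assert (HGQ : need_marked 0 (develop is_lab1 Mh))
    by exact (need_marked_msteps is_lab1 eq_refl _ _ HMQ 0 HG).
  assert (HLQ : labels_in lab02 (develop is_lab1 Mh)).
  { apply (labels_in_develop lab02 lab012 is_lab1); auto.
    intros [|[|[|l]]]; unfold lab012, lab02, is_lab1; simpl; auto; discriminate. }
  replace (develop is_lab12 Mh) with (develop is_lab2 (develop is_lab1 Mh)).
  - apply (msteps_steps is_lab2 eq_refl); auto.
    apply msteps_develop; eauto using need_marked_well_marked.
  - rewrite (develop_ext lab02 is_lab2 is_lab12) by
      (auto; intros [|[|[|l]]]; unfold lab02, is_lab2, is_lab12; simpl; auto; discriminate).
    apply (develop_msteps is_lab12 eq_refl); eauto using need_marked_well_marked.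
    apply msteps_mono with is_lab1; auto.
    intros l. unfold is_lab1, is_lab12. intros ->. auto.
Qed.

Lemma strip : forall t t1 t2, step t t1 -> par t t2 -> exists t3, par t1 t3 /\ steps t2 t3.
Proof.
  intros t t1 t2 Hs [M [HL [HG [<- <-]]]].
  destruct (step_mark_step _ t1 Hs) as [X [X' [HX [HXX' [HGX <-]]]]].
  assert (HUM : unmark M = unmark X) by (rewrite HX, embed_erase; auto).
  destruct (mark_step_transport X X' HXX' M HUM HL) as [Mh [Y' [<- [HLh [HGh [HMY [HY HLY]]]]]]].
  specialize (HGh 0 HG HGX).
  exists (erase (develop is_lab12 Mh)). split.
  - exists Y'. split; [|split; [|split]]; auto.
    + eapply need_marked_mstep; eauto. reflexivity.
    + rewrite <- (erase_unmark Y'), HY, erase_unmark. auto.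
    + rewrite develop_lab12_mstep with (Mh := Mh); eauto using need_marked_well_marked.
  - rewrite (develop_relabel forget2 is_lab1 is_lab1), erase_relabel; auto.
    + apply develop_lab1_steps_lab12; auto.
    + intros [|[|[|l]]]; reflexivity.
Qed.

Lemma strip_steps : forall t t1, steps t t1 ->
  forall t2, par t t2 -> exists t3, par t1 t3 /\ steps t2 t3.
Proof.
  induction 1; intros.
  - eapply strip; eauto.
  - exists t2. split; auto. apply rt_refl.
  - destruct (IHclos_refl_trans1 t2 H1) as [s3 [Hs1 Hs2]].
    destruct (IHclos_refl_trans2 s3 Hs1) as [t3 [Ht1 Ht2]].
    exists t3. split; auto. eapply rt_trans; eauto.
Qed.

Theorem lemma1 : forall e e1 e2 : term,
  steps e e1 -> steps e e2 -> exists e', steps e1 e' /\ steps e2 e'.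
Proof.
  intros e e1 e2 H1 H2. revert e1 H1.
  induction H2 as [x y Hxy | x | x y z _ IHxy _ IHyz]; intros e1 H1.
  - destruct (strip_steps _ _ H1 y (step_par _ _ Hxy)) as [t3 [Ht1 Ht2]].
    exists t3. split; auto. apply par_steps; auto.
  - exists e1. split; [apply rt_refl | auto].
  - destruct (IHxy e1 H1) as [e' [Ha Hb]].
    destruct (IHyz e' Hb) as [e'' [Hc Hd]].
    exists e''. split; auto. eapply rt_trans; eauto.
Qed.
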